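(* Let $F\in\mathrm{Lip}_{\rm loc}(\mathbb{R})$ satisfy $F(p)=p$ for $p\in[0,1]$ and $F(p)\le p$ for $p\in[-1,0]$, and let $g(x)=\max\{1-|x|,0\}$ for $x\in\mathbb{R}$. For $\varepsilon>0$ let $u^\varepsilon$ be the viscosity solution of $u^\varepsilon_t+F(u^\varepsilon_x)=\varepsilon u^\varepsilon_{xx}$ in $\mathbb{R}\times(0,\infty)$, $u^\varepsilon(x,0)=g(x)$, and let $u$ be the viscosity solution of $u_t+F(u_x)=0$ in $\mathbb{R}\times(0,\infty)$, $u(x,0)=g(x)$. Then for every $\varepsilon\in(0,\tfrac14)$, \[ |u^\varepsilon(0,1)-u(0,1)|\ge \frac{\mathrm{e}-1}{\sqrt{\pi}\,\mathrm{e}}\sqrt{\varepsilon}. \] *)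

From Stdlib Require Import Reals.
Open Scope R_scope.

Definition loc_lipschitz (F : R -> R) : Prop :=
  forall M : R, exists L : R, forall p q : R,
    Rabs p <= M -> Rabs q <= M -> Rabs (F p - F q) <= L * Rabs (p - q).

Definition g (x : R) : R := Rmax (1 - Rabs x) 0.

Definition continuous2 (f : R -> R -> R) : Prop :=
  forall x t eps, 0 < eps -> exists d, 0 < d /\
    forall y s, Rabs (y - x) < d -> Rabs (s - t) < d ->
      Rabs (f y s - f x t) < eps.

Definition BUC_half (u : R -> R -> R) : Prop :=
  (exists M, forall x t, 0 <= t -> Rabs (u x t) <= M) /\
  (forall eps, 0 < eps -> exists d, 0 < d /\
    forall x t y s, 0 <= t -> 0 <= s -> Rabs (y - x) < d -> Rabs (s - t) < d ->
      Rabs (u y s - u x t) < eps).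

Definition C1_with (phi phit phix : R -> R -> R) : Prop :=
  (forall x t, derivable_pt_lim (fun s => phi x s) t (phit x t)) /\
  (forall x t, derivable_pt_lim (fun y => phi y t) x (phix x t)) /\
  continuous2 phi /\ continuous2 phit /\ continuous2 phix.

Definition C12_with (phi phit phix phixx : R -> R -> R) : Prop :=
  C1_with phi phit phix /\
  (forall x t, derivable_pt_lim (fun y => phix y t) x (phixx x t)) /\
  continuous2 phixx.

Definition loc_max_at (u phi : R -> R -> R) (x0 t0 : R) : Prop :=
  exists r, 0 < r /\ forall x t, 0 < t -> Rabs (x - x0) < r -> Rabs (t - t0) < r ->
    u x t - phi x t <= u x0 t0 - phi x0 t0.
Definition loc_min_at (u phi : R -> R -> R) (x0 t0 : R) : Prop :=
  exists r, 0 < r /\ forall x t, 0 < t -> Rabs (x - x0) < r -> Rabs (t - t0) < r ->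
    u x t - phi x t >= u x0 t0 - phi x0 t0.

Definition visc_sol_viscous (F : R -> R) (eps : R) (g0 : R -> R)
  (u : R -> R -> R) : Prop :=
  (forall x, u x 0 = g0 x) /\
  (forall x t e, 0 <= t -> 0 < e -> exists d, 0 < d /\
     forall y s, 0 <= s -> Rabs (y - x) < d -> Rabs (s - t) < d ->
       Rabs (u y s - u x t) < e) /\
  (forall phi phit phix phixx x0 t0, 0 < t0 -> C12_with phi phit phix phixx ->
     loc_max_at u phi x0 t0 ->
     phit x0 t0 + F (phix x0 t0) - eps * phixx x0 t0 <= 0) /\
  (forall phi phit phix phixx x0 t0, 0 < t0 -> C12_with phi phit phix phixx ->
     loc_min_at u phi x0 t0 ->
     phit x0 t0 + F (phix x0 t0) - eps * phixx x0 t0 >= 0).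

Definition visc_sol_HJ (F : R -> R) (g0 : R -> R) (u : R -> R -> R) : Prop :=
  (forall x, u x 0 = g0 x) /\
  (forall x t e, 0 <= t -> 0 < e -> exists d, 0 < d /\
     forall y s, 0 <= s -> Rabs (y - x) < d -> Rabs (s - t) < d ->
       Rabs (u y s - u x t) < e) /\
  (forall phi phit phix x0 t0, 0 < t0 -> C1_with phi phit phix ->
     loc_max_at u phi x0 t0 -> phit x0 t0 + F (phix x0 t0) <= 0) /\
  (forall phi phit phix x0 t0, 0 < t0 -> C1_with phi phit phix ->
     loc_min_at u phi x0 t0 -> phit x0 t0 + F (phix x0 t0) >= 0).

(* The inviscid solution is small at (0, 1): the functions
   c softplus((x - t + 1) / c) + a sqrt(1 + x^2) + c (1 + t) are strict supersolutions of
   u_t + F(u_x) = 0 lying above g, so u(0, 1) <= sqrt eps / 64.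
   The viscous solution is large there: with q = sqrt eps, the function
   q lam H((x - t + 1) / (q lam), t / lam^2), where H is the heat flow of the tent max(0, min(s, 4 - s)),
   solves V_t + V_x = eps V_xx, lies below g at t = 0, and has V_x in [-1, 1], where F(p) <= p;
   after small corrections it is a strict subsolution, so u^eps(0, 1) >= sqrt eps (H(0, 1) - 1/64).
   Both comparisons locate a positive interior maximum of the difference, which exists by uniform
   continuity and confinement, and contradict the viscosity inequality there.  Elementary bounds
   on the Gaussian integral give H(0, 1) >= 0.405 > (e - 1) / (sqrt PI e) + 1/32. *)

From Stdlib Require Import Reals Lra Psatz IndefiniteDescription.
From Coquelicot Require Import Coquelicot.
Open Scope R_scope.

Lemma continuity_pt_ex_derive (f : R -> R) x : ex_derive f x -> continuity_pt f x.
Proof. intros H. apply continuity_pt_filterlim. exact (ex_derive_continuous f x H). Qed.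

Lemma is_derive_val (f : R -> R) (x l l' : R) : is_derive f x l -> l = l' -> is_derive f x l'.
Proof. intros H ->. exact H. Qed.

Lemma Derive_of_is_derive (f : R -> R) x l : is_derive f x l -> Derive (fun y => f y) x = l.
Proof. apply is_derive_unique. Qed.

Lemma is_derive_sub_const (f : R -> R) x l c :
  is_derive f x l -> is_derive (fun y => f y - c) x l.
Proof.
  intros H. auto_derive; [eexists; exact H|].
  rewrite (Derive_of_is_derive f x l H). ring.
Qed.

Lemma is_derive_second_diff (f1 f2 f3 : R -> R) x l1 l2 l3 :
  is_derive f1 x l1 -> is_derive f2 x l2 -> is_derive f3 x l3 ->
  is_derive (fun y => f1 y - 2 * f2 y + f3 y) x (l1 - 2 * l2 + l3).
Proof.
  intros H1 H2 H3. auto_derive; [repeat split; eexists; eassumption|].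
  rewrite (Derive_of_is_derive f1 x l1 H1), (Derive_of_is_derive f2 x l2 H2),
    (Derive_of_is_derive f3 x l3 H3). ring.
Qed.

Lemma le_of_derive_nonneg (f df : R -> R) a b :
  a <= b -> (forall x, a <= x <= b -> is_derive f x (df x)) ->
  (forall x, a <= x <= b -> 0 <= df x) -> f a <= f b.
Proof.
  intros Hab Hd Hp.
  destruct (MVT_gen f a b df) as [c [Hc Heq]];
    rewrite ?Rmin_left, ?Rmax_right in * by lra.
  - intros x Hx. apply Hd. lra.
  - intros x Hx. apply continuity_pt_ex_derive. exists (df x). apply Hd; lra.
  - assert (0 <= df c) by (apply Hp; lra). nra.
Qed.

Lemma Rabs_diff_le_of_derive_interval (f df : R -> R) a b L :
  a <= b -> (forall x, a <= x <= b -> is_derive f x (df x)) ->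
  (forall x, a <= x <= b -> Rabs (df x) <= L) -> Rabs (f b - f a) <= L * (b - a).
Proof.
  intros hab Hd Hb. apply Rabs_le_between'.
  enough (L * a - f a <= L * b - f b /\ f a + L * a <= f b + L * b) by lra.
  split; [apply (le_of_derive_nonneg (fun x => L * x - f x) (fun x => L - df x))
         |apply (le_of_derive_nonneg (fun x => f x + L * x) (fun x => df x + L))]; auto;
    try (intros x hx; specialize (Hb x hx); apply Rabs_le_between in Hb; lra);
    intros x hx; auto_derive; try (eexists; apply (Hd x hx));
    rewrite (Derive_of_is_derive f x _ (Hd x hx)); ring.
Qed.

Lemma Rabs_diff_le_of_derive (f df : R -> R) a b L :
  (forall x, is_derive f x (df x)) -> (forall x, Rmin a b <= x <= Rmax a b -> Rabs (df x) <= L) ->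
  Rabs (f b - f a) <= L * Rabs (b - a).
Proof.
  intros Hd Hb. destruct (Rle_dec a b) as [h|h].
  - rewrite Rmin_left, Rmax_right in Hb by lra. rewrite (Rabs_right (b - a)) by lra.
    apply (Rabs_diff_le_of_derive_interval f df); auto.
  - rewrite Rmin_right, Rmax_left in Hb by lra.
    rewrite Rabs_minus_sym, (Rabs_minus_sym b), (Rabs_right (a - b)) by lra.
    apply (Rabs_diff_le_of_derive_interval f df); auto; lra.
Qed.

Lemma eq_of_derive_zero (f : R -> R) a b : (forall x, is_derive f x 0) -> f a = f b.
Proof.
  intros H.
  assert (Hle : Rabs (f b - f a) <= 0 * Rabs (b - a)).
  { apply (Rabs_diff_le_of_derive f (fun _ => 0)); auto. intros. rewrite Rabs_R0. lra. }
  rewrite Rmult_0_l in Hle. pose proof (Rabs_pos (f b - f a)).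
  assert (Rabs (f b - f a) = 0) as Z%Rabs_eq_0 by lra. lra.
Qed.

Lemma exp_le_compat a b : a <= b -> exp a <= exp b.
Proof. intros [h|h]; [left; apply exp_increasing, h | subst; lra]. Qed.

(** * The Gaussian integral *)

Definition gauss (r : R) : R := exp (- (r * r)).

Lemma gauss_pos x : 0 < gauss x.
Proof. apply exp_pos. Qed.

Lemma gauss_le_1 x : gauss x <= 1.
Proof. unfold gauss. rewrite <- exp_0. apply exp_le_compat. nra. Qed.

Lemma gauss_opp x : gauss (- x) = gauss x.
Proof. unfold gauss. f_equal. ring. Qed.

Lemma gauss_cont x : continuity_pt gauss x.
Proof. apply continuity_pt_ex_derive. unfold gauss. auto_derive. auto. Qed.

Definition gauss_int (z : R) : R := RInt gauss 0 z.

Lemma is_derive_gauss_int z : is_derive gauss_int z (gauss z).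
Proof.
  apply (is_derive_RInt gauss gauss_int 0 z); [|apply continuity_pt_filterlim, gauss_cont].
  apply filter_forall. intros b. apply (@RInt_correct R_CompleteNormedModule).
  apply (@ex_RInt_continuous R_CompleteNormedModule).
  intros y _. apply continuity_pt_filterlim, gauss_cont.
Qed.

Lemma Derive_gauss_int z : Derive gauss_int z = gauss z.
Proof. apply is_derive_unique, is_derive_gauss_int. Qed.

Ltac auto_derive_gauss_int :=
  auto_derive; [repeat split; try (eexists; apply is_derive_gauss_int); auto
               | rewrite ?Derive_gauss_int].

Lemma gauss_int_0 : gauss_int 0 = 0.
Proof. apply (@RInt_point R_CompleteNormedModule). Qed.

Lemma gauss_int_opp z : gauss_int (- z) = - gauss_int z.
Proof.
  enough (gauss_int (- z) + gauss_int z = gauss_int (- 0) + gauss_int 0)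
    by (rewrite Ropp_0, gauss_int_0 in *; lra).
  apply (eq_of_derive_zero (fun x => gauss_int (- x) + gauss_int x)).
  intros x. auto_derive_gauss_int. rewrite gauss_opp. ring.
Qed.

Lemma gauss_int_le a b : a <= b -> gauss_int a <= gauss_int b.
Proof.
  intros h. apply (le_of_derive_nonneg gauss_int gauss); auto.
  - intros. apply is_derive_gauss_int.
  - intros. left. apply gauss_pos.
Qed.

(* On [a, b], a e^{-x^2} <= x e^{-x^2} <= b e^{-x^2}, and x e^{-x^2} has primitive -e^{-x^2} / 2. *)
Lemma gauss_int_diff_le a b : 0 < a <= b -> gauss_int b - gauss_int a <= (gauss a - gauss b) / (2 * a).
Proof.
  intros [ha hab].
  enough ((gauss a - gauss a) / (2 * a) - (gauss_int a - gauss_int a) <=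
          (gauss a - gauss b) / (2 * a) - (gauss_int b - gauss_int a)) by
    (replace ((gauss a - gauss a) / (2 * a) - (gauss_int a - gauss_int a)) with 0 in H
      by (field; lra); lra).
  apply (le_of_derive_nonneg (fun x => (gauss a - gauss x) / (2 * a) - (gauss_int x - gauss_int a))
     (fun x => gauss x * (x / a - 1))); auto.
  - intros x _. unfold gauss at 2 3. auto_derive_gauss_int. unfold gauss. field. lra.
  - intros x hx. pose proof (gauss_pos x). apply Rmult_le_pos; [lra|].
    enough (1 <= x / a) by lra. apply Rle_div_r; lra.
Qed.

Lemma gauss_int_diff_ge a b : 0 < a <= b -> (gauss a - gauss b) / (2 * b) <= gauss_int b - gauss_int a.
Proof.
  intros [ha hab].
  enough ((gauss_int a - gauss_int a) - (gauss a - gauss a) / (2 * b) <=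
          (gauss_int b - gauss_int a) - (gauss a - gauss b) / (2 * b)) by
    (replace ((gauss_int a - gauss_int a) - (gauss a - gauss a) / (2 * b)) with 0 in H
      by (field; lra); lra).
  apply (le_of_derive_nonneg (fun x => (gauss_int x - gauss_int a) - (gauss a - gauss x) / (2 * b))
     (fun x => gauss x * (1 - x / b))); auto.
  - intros x _. unfold gauss at 2 3. auto_derive_gauss_int. unfold gauss. field. lra.
  - intros x hx. pose proof (gauss_pos x). apply Rmult_le_pos; [lra|].
    enough (x / b <= 1) by lra. apply Rle_div_l; lra.
Qed.

Lemma exp_opp_le y : 0 <= y -> exp (- y) <= 1 - y + y * y / 2.
Proof.
  intros hy.
  enough (1 - 0 + 0 * 0 / 2 - exp (- 0) <= 1 - y + y * y / 2 - exp (- y))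
    by (rewrite Ropp_0, exp_0 in H; lra).
  apply (le_of_derive_nonneg (fun y => 1 - y + y * y / 2 - exp (- y))
    (fun y => y - 1 + exp (- y))); auto.
  - intros x _. auto_derive; auto. field.
  - intros x _. pose proof (exp_ineq1_le (- x)). lra.
Qed.

Lemma exp_opp_ge y : 0 <= y -> 1 - y + y * y / 2 - y * y * y / 6 <= exp (- y).
Proof.
  intros hy.
  enough (exp (- 0) - (1 - 0 + 0 * 0 / 2 - 0 * 0 * 0 / 6) <=
          exp (- y) - (1 - y + y * y / 2 - y * y * y / 6))
    by (rewrite Ropp_0, exp_0 in H; lra).
  apply (le_of_derive_nonneg (fun y => exp (- y) - (1 - y + y * y / 2 - y * y * y / 6))
     (fun y => 1 - y + y * y / 2 - exp (- y))); auto.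
  - intros x _. auto_derive; auto. field.
  - intros x hx. pose proof (exp_opp_le x ltac:(lra)). lra.
Qed.

Lemma gauss_int_1_le : gauss_int 1 <= 1 - 1 / 3 + 1 / 10.
Proof.
  enough (0 - 0 * 0 * 0 / 3 + 0 * 0 * 0 * 0 * 0 / 10 - gauss_int 0 <=
          1 - 1 * 1 * 1 / 3 + 1 * 1 * 1 * 1 * 1 / 10 - gauss_int 1)
    by (rewrite gauss_int_0 in H; lra).
  apply (le_of_derive_nonneg (fun x => x - x * x * x / 3 + x * x * x * x * x / 10 - gauss_int x)
    (fun x => 1 - x * x + x * x * x * x / 2 - gauss x)); [lra| |].
  - intros x _. auto_derive_gauss_int. field.
  - intros x _. unfold gauss. pose proof (exp_opp_le (x * x) ltac:(nra)). nra.
Qed.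

Lemma gauss_int_1_ge : 2 / 3 <= gauss_int 1.
Proof.
  enough (gauss_int 0 - 0 + 0 * 0 * 0 / 3 <= gauss_int 1 - 1 + 1 * 1 * 1 / 3)
    by (rewrite gauss_int_0 in H; lra).
  apply (le_of_derive_nonneg (fun x => gauss_int x - x + x * x * x / 3)
    (fun x => gauss x - 1 + x * x)); [lra| |].
  - intros x _. auto_derive_gauss_int. field.
  - intros x _. unfold gauss. pose proof (exp_ineq1_le (- (x * x))). lra.
Qed.

Lemma gauss_int_le_3_2 z : gauss_int z <= 3 / 2.
Proof.
  pose proof gauss_int_1_le. destruct (Rle_dec z 1).
  - pose proof (gauss_int_le z 1 r). lra.
  - pose proof (gauss_int_diff_le 1 z ltac:(lra)).
    pose proof (gauss_pos z). pose proof (gauss_le_1 1). lra.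
Qed.

Lemma gauss_int_range_bounded : bound (fun y => exists z, y = gauss_int z).
Proof. exists (3 / 2). intros y [z ->]. apply gauss_int_le_3_2. Qed.

(* The total mass sup_z gauss_int z, i.e. sqrt(PI)/2; only numerical bounds on it are used. *)
Definition gauss_mass : R :=
  proj1_sig (completeness _ gauss_int_range_bounded (ex_intro _ _ (ex_intro _ 0 eq_refl))).

Lemma gauss_mass_lub : is_lub (fun y => exists z, y = gauss_int z) gauss_mass.
Proof. unfold gauss_mass. destruct completeness. exact i. Qed.

Lemma gauss_int_le_mass z : gauss_int z <= gauss_mass.
Proof. apply gauss_mass_lub. exists z. reflexivity. Qed.

Lemma gauss_mass_le_tail a : 0 < a -> gauss_mass <= gauss_int a + gauss a / (2 * a).
Proof.
  intros ha. apply gauss_mass_lub. intros y [z ->].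
  assert (0 <= gauss a / (2 * a)) by (apply Rdiv_le_0_compat; [left; apply gauss_pos | lra]).
  destruct (Rle_dec z a).
  - pose proof (gauss_int_le z a r). lra.
  - pose proof (gauss_int_diff_le a z ltac:(lra)). pose proof (gauss_pos z).
    enough ((gauss a - gauss z) / (2 * a) <= gauss a / (2 * a)) by lra.
    apply Rmult_le_compat_r; [left; apply Rinv_0_lt_compat|]; lra.
Qed.

Lemma gauss_mass_ge : 2 / 3 <= gauss_mass.
Proof. pose proof (gauss_int_le_mass 1). pose proof gauss_int_1_ge. lra. Qed.

Definition cdf_scale : R := / (2 * gauss_mass).

Lemma cdf_scale_pos : 0 < cdf_scale.
Proof. pose proof gauss_mass_ge. apply Rinv_0_lt_compat. lra. Qed.

Lemma cdf_scale_le : cdf_scale <= 3 / 4.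
Proof.
  pose proof gauss_mass_ge. unfold cdf_scale.
  rewrite <- (Rinv_inv (3 / 4)). apply Rinv_le_contravar; lra.
Qed.

Lemma cdf_scale_mass : cdf_scale * gauss_mass = 1 / 2.
Proof. pose proof gauss_mass_ge. unfold cdf_scale. field. lra. Qed.

(* The distribution function of the normal law of variance 1/2. *)
Definition gauss_cdf (z : R) : R := 1 / 2 + cdf_scale * gauss_int z.

Lemma gauss_cdf_range z : 0 <= gauss_cdf z <= 1.
Proof.
  unfold gauss_cdf. pose proof (gauss_int_le_mass z). pose proof (gauss_int_le_mass (- z)).
  rewrite gauss_int_opp in *. pose proof cdf_scale_pos. pose proof cdf_scale_mass. split; nra.
Qed.

Lemma gauss_cdf_opp z : gauss_cdf z + gauss_cdf (- z) = 1.
Proof. unfold gauss_cdf. rewrite gauss_int_opp. field. Qed.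

Lemma is_derive_gauss_cdf z : is_derive gauss_cdf z (cdf_scale * gauss z).
Proof. unfold gauss_cdf. auto_derive_gauss_int. ring. Qed.

Lemma Derive_gauss_cdf z : Derive (fun y => gauss_cdf y) z = cdf_scale * gauss z.
Proof. apply is_derive_unique, is_derive_gauss_cdf. Qed.

Lemma gauss_cdf_le a b : a <= b -> gauss_cdf a <= gauss_cdf b.
Proof.
  intros h. unfold gauss_cdf. pose proof (gauss_int_le a b h). pose proof cdf_scale_pos. nra.
Qed.

Lemma gauss_cdf_cont z : continuity_pt gauss_cdf z.
Proof. apply continuity_pt_ex_derive. eexists. apply is_derive_gauss_cdf. Qed.

Lemma gauss_cdf_tail z : 0 <= z -> 2 * z * gauss_cdf (- z) <= cdf_scale * gauss z.
Proof.
  intros [hz|<-].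
  - pose proof (gauss_mass_le_tail z hz). unfold gauss_cdf. rewrite gauss_int_opp.
    rewrite <- cdf_scale_mass. pose proof cdf_scale_pos.
    enough (2 * z * (gauss_mass - gauss_int z) <= gauss z) by nra.
    apply (Rmult_le_compat_l (2 * z)) in H; [|lra].
    replace (2 * z * (gauss_int z + gauss z / (2 * z))) with (2 * z * gauss_int z + gauss z)
      in H by (field; lra). lra.
  - pose proof cdf_scale_pos. pose proof (gauss_pos 0). nra.
Qed.

(** * Heat flows of the ramp and of the tent *)

(* The solution of w_th = w_yy with initial datum max(y, 0). *)
Definition heat_ramp (y th : R) : R :=
  y * gauss_cdf (y / (2 * sqrt th)) + sqrt th * cdf_scale * gauss (y / (2 * sqrt th)).
Definition heat_ramp_y (y th : R) : R := gauss_cdf (y / (2 * sqrt th)).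
Definition heat_ramp_yy (y th : R) : R := cdf_scale * gauss (y / (2 * sqrt th)) / (2 * sqrt th).

Lemma is_derive_heat_ramp_comp (a b : R -> R) (da db t : R) :
  is_derive a t da -> is_derive b t db -> 0 < b t ->
  is_derive (fun t => heat_ramp (a t) (b t)) t
    (da * heat_ramp_y (a t) (b t) + db * heat_ramp_yy (a t) (b t)).
Proof.
  intros Ha Hb Hpos. unfold heat_ramp, heat_ramp_y, heat_ramp_yy, gauss.
  assert (0 < sqrt (b t)) by (apply sqrt_lt_R0; auto).
  auto_derive; [repeat split; try (eexists; eassumption); try (eexists; apply is_derive_gauss_cdf);
                try lra; auto | lra ..|].
  rewrite (Derive_of_is_derive a t da Ha), (Derive_of_is_derive b t db Hb), Derive_gauss_cdf.
  unfold gauss, Rdiv. set (Z := exp _). set (S := sqrt (b t)). field. unfold S. lra.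
Qed.

Lemma is_derive_heat_ramp_y_comp (a : R -> R) (th da t : R) :
  is_derive a t da -> 0 < th ->
  is_derive (fun t => heat_ramp_y (a t) th) t (da * heat_ramp_yy (a t) th).
Proof.
  intros Ha Hpos. unfold heat_ramp_y, heat_ramp_yy.
  assert (0 < sqrt th) by (apply sqrt_lt_R0; auto).
  auto_derive; [repeat split; try (eexists; eassumption); try (eexists; apply is_derive_gauss_cdf);
                try lra; auto | lra ..|].
  rewrite (Derive_of_is_derive a t da Ha), Derive_gauss_cdf.
  unfold gauss, Rdiv. set (Z := exp _). set (S := sqrt th). field. unfold S. lra.
Qed.

Lemma heat_ramp_y_range y th : 0 <= heat_ramp_y y th <= 1.
Proof. apply gauss_cdf_range. Qed.

Lemma heat_ramp_y_le a b th : 0 < th -> a <= b -> heat_ramp_y a th <= heat_ramp_y b th.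
Proof.
  intros h hab. apply gauss_cdf_le. assert (0 < sqrt th) by (apply sqrt_lt_R0; auto).
  apply Rmult_le_compat_r; [left; apply Rinv_0_lt_compat|]; lra.
Qed.

Lemma heat_ramp_yy_range y th : 0 < th -> 0 <= heat_ramp_yy y th <= cdf_scale / (2 * sqrt th).
Proof.
  intros h. unfold heat_ramp_yy. assert (0 < sqrt th) by (apply sqrt_lt_R0; auto).
  pose proof (gauss_pos (y / (2 * sqrt th))). pose proof (gauss_le_1 (y / (2 * sqrt th))).
  pose proof cdf_scale_pos.
  split; [apply Rdiv_le_0_compat; nra|].
  apply Rmult_le_compat_r; [left; apply Rinv_0_lt_compat|]; nra.
Qed.

Lemma heat_ramp_ge y th : 0 < th -> Rmax y 0 <= heat_ramp y th.
Proof.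
  intros h. assert (hs : 0 < sqrt th) by (apply sqrt_lt_R0; auto).
  unfold heat_ramp. set (s := sqrt th) in *. set (z := y / (2 * s)).
  assert (hy : y = 2 * s * z) by (unfold z; field; lra).
  pose proof cdf_scale_pos. unfold Rmax. destruct (Rle_dec y 0).
  - assert (hz : z <= 0) by (rewrite hy in r; nra).
    pose proof (gauss_cdf_tail (- z) ltac:(lra)). rewrite Ropp_involutive, gauss_opp in H0.
    clearbody z s. subst y. nra.
  - assert (hz : 0 <= z) by (rewrite hy in n; nra).
    pose proof (gauss_cdf_tail z hz). pose proof (gauss_cdf_opp z).
    clearbody z s. subst y. nra.
Qed.

Lemma heat_ramp_le y th : 0 < th -> heat_ramp y th <= Rmax y 0 + sqrt th * cdf_scale.
Proof.
  intros h. assert (hs : 0 < sqrt th) by (apply sqrt_lt_R0; auto).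
  unfold heat_ramp. set (s := sqrt th) in *. set (z := y / (2 * s)).
  pose proof cdf_scale_pos. pose proof (gauss_cdf_range z).
  pose proof (gauss_pos z). pose proof (gauss_le_1 z).
  clearbody z s. assert (0 < s * cdf_scale) by nra.
  assert (s * cdf_scale * gauss z <= s * cdf_scale) by nra.
  unfold Rmax. destruct (Rle_dec y 0); nra.
Qed.

Lemma heat_ramp_sub_opp y th : heat_ramp y th - heat_ramp (- y) th = y.
Proof.
  unfold heat_ramp. replace (- y / (2 * sqrt th)) with (- (y / (2 * sqrt th))) by (unfold Rdiv; ring).
  rewrite gauss_opp. pose proof (gauss_cdf_opp (y / (2 * sqrt th))). nra.
Qed.

Lemma heat_ramp_diff_range a b th : 0 < th -> a <= b ->
  0 <= heat_ramp b th - heat_ramp a th <= b - a.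
Proof.
  intros h hab.
  assert (Hd : forall y, is_derive (fun y => heat_ramp y th) y (heat_ramp_y y th)).
  { intros y. eapply is_derive_val.
    - apply (is_derive_heat_ramp_comp (fun y => y) (fun _ => th) 1 0 y); auto;
        auto_derive; auto.
    - ring. }
  split.
  - enough (heat_ramp a th <= heat_ramp b th) by lra.
    apply (le_of_derive_nonneg (fun y => heat_ramp y th) (fun y => heat_ramp_y y th)); auto.
    intros; apply heat_ramp_y_range.
  - enough (a - heat_ramp a th <= b - heat_ramp b th) by lra.
    apply (le_of_derive_nonneg (fun y => y - heat_ramp y th) (fun y => 1 - heat_ramp_y y th)); auto.
    + intros y _. apply (is_derive_minus (fun y => y) (fun y => heat_ramp y th)); auto.
      auto_derive; auto.
    + intros y _. pose proof (heat_ramp_y_range y th). lra.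
Qed.

Definition tent (s : R) : R := Rmax 0 (Rmin s (4 - s)).

(* max(s,0) - 2 max(s-2,0) + max(s-4,0) = tent s, so this is the heat flow of the tent. *)
Definition heat_tent (s th : R) : R :=
  heat_ramp s th - 2 * heat_ramp (s - 2) th + heat_ramp (s - 4) th.
Definition heat_tent_s (s th : R) : R :=
  heat_ramp_y s th - 2 * heat_ramp_y (s - 2) th + heat_ramp_y (s - 4) th.
Definition heat_tent_ss (s th : R) : R :=
  heat_ramp_yy s th - 2 * heat_ramp_yy (s - 2) th + heat_ramp_yy (s - 4) th.

Lemma heat_tent_s_range s th : 0 < th -> -1 <= heat_tent_s s th <= 1.
Proof.
  intros h. unfold heat_tent_s.
  pose proof (heat_ramp_y_le (s - 2) s th h ltac:(lra)).
  pose proof (heat_ramp_y_le (s - 4) (s - 2) th h ltac:(lra)).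
  pose proof (heat_ramp_y_range s th). pose proof (heat_ramp_y_range (s - 4) th). lra.
Qed.

Lemma heat_tent_ss_bound s th : 0 < th -> Rabs (heat_tent_ss s th) <= 2 * cdf_scale / sqrt th.
Proof.
  intros h. unfold heat_tent_ss. assert (0 < sqrt th) by (apply sqrt_lt_R0; auto).
  pose proof (heat_ramp_yy_range s th h). pose proof (heat_ramp_yy_range (s - 2) th h).
  pose proof (heat_ramp_yy_range (s - 4) th h).
  replace (2 * cdf_scale / sqrt th) with (4 * (cdf_scale / (2 * sqrt th))) by (field; lra).
  apply Rabs_le. lra.
Qed.

Lemma heat_tent_le_2 s th : 0 < th -> heat_tent s th <= 2.
Proof.
  intros h. unfold heat_tent.
  pose proof (heat_ramp_diff_range (s - 2) s th h ltac:(lra)).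
  pose proof (heat_ramp_diff_range (s - 4) (s - 2) th h ltac:(lra)). lra.
Qed.

Lemma heat_tent_sym s th : heat_tent (4 - s) th = heat_tent s th.
Proof.
  unfold heat_tent. pose proof (heat_ramp_sub_opp (4 - s) th).
  pose proof (heat_ramp_sub_opp (2 - s) th). pose proof (heat_ramp_sub_opp s th).
  replace (4 - s - 2) with (2 - s) by ring. replace (4 - s - 4) with (- s) by ring.
  replace (- (4 - s)) with (s - 4) in H by ring. replace (- (2 - s)) with (s - 2) in H0 by ring.
  lra.
Qed.

Lemma heat_tent_le_tent s th : 0 < th -> heat_tent s th <= tent s + sqrt th * cdf_scale.
Proof.
  intros h.
  assert (Hleft : forall s, s <= 2 -> heat_tent s th <= tent s + sqrt th * cdf_scale).
  { intros s0 hs0. unfold heat_tent.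
    pose proof (heat_ramp_diff_range (s0 - 4) (s0 - 2) th h ltac:(lra)).
    pose proof (heat_ramp_le s0 th h). pose proof (heat_ramp_ge (s0 - 2) th h).
    unfold tent, Rmax, Rmin in *.
    destruct (Rle_dec s0 0); destruct (Rle_dec (s0 - 2) 0); destruct (Rle_dec s0 (4 - s0));
      destruct (Rle_dec 0 s0); destruct (Rle_dec 0 (4 - s0)); lra. }
  destruct (Rle_dec s 2); [auto|].
  rewrite <- heat_tent_sym. replace (tent s) with (tent (4 - s)).
  - apply Hleft. lra.
  - unfold tent. replace (4 - (4 - s)) with s by ring. rewrite Rmin_comm. reflexivity.
Qed.

Lemma is_derive_heat_tent_comp (a b : R -> R) (da db t : R) :
  is_derive a t da -> is_derive b t db -> 0 < b t ->
  is_derive (fun t => heat_tent (a t) (b t)) t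
    (da * heat_tent_s (a t) (b t) + db * heat_tent_ss (a t) (b t)).
Proof.
  intros Ha Hb hb. unfold heat_tent. eapply is_derive_val.
  - apply (is_derive_second_diff (fun t => heat_ramp (a t) (b t))
      (fun t => heat_ramp (a t - 2) (b t)) (fun t => heat_ramp (a t - 4) (b t)));
      apply is_derive_heat_ramp_comp;
      solve [exact Ha | exact Hb | exact hb | apply is_derive_sub_const; exact Ha].
  - unfold heat_tent_s, heat_tent_ss. ring.
Qed.

Lemma is_derive_heat_tent_s_comp (a : R -> R) (th da t : R) :
  is_derive a t da -> 0 < th ->
  is_derive (fun t => heat_tent_s (a t) th) t (da * heat_tent_ss (a t) th).
Proof.
  intros Ha hth. unfold heat_tent_s. eapply is_derive_val.
  - apply (is_derive_second_diff (fun t => heat_ramp_y (a t) th)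
      (fun t => heat_ramp_y (a t - 2) th) (fun t => heat_ramp_y (a t - 4) th));
      apply is_derive_heat_ramp_y_comp;
      solve [exact Ha | exact hth | apply is_derive_sub_const; exact Ha].
  - unfold heat_tent_ss. ring.
Qed.

(** * The value of the tent flow at (0, 1) *)

Lemma heat_tent_0_1 :
  heat_tent 0 1 = cdf_scale * (1 - 2 * gauss 1 + gauss 2) + 4 * cdf_scale * (gauss_int 2 - gauss_int 1).
Proof.
  unfold heat_tent, heat_ramp. rewrite sqrt_1.
  replace ((0 - 2) / (2 * 1)) with (Ropp 1) by field.
  replace ((0 - 4) / (2 * 1)) with (Ropp 2) by field.
  replace (0 / (2 * 1)) with 0 by field.
  rewrite !gauss_opp. unfold gauss_cdf. rewrite !gauss_int_opp.
  replace (gauss 0) with 1 by (unfold gauss; rewrite Rmult_0_l, Ropp_0, exp_0; reflexivity).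
  field.
Qed.

Lemma sqr_bounds l u x : 0 <= l -> l <= x <= u -> l * l <= x * x <= u * u.
Proof. intros h [h1 h2]. split; nra. Qed.

Lemma sqrt_bounds a l u : 0 <= l -> 0 <= u -> l * l <= a <= u * u -> l <= sqrt a <= u.
Proof.
  intros hl hu [h1 h2]. rewrite <- (sqrt_square l), <- (sqrt_square u) by auto.
  split; apply sqrt_le_1_alt; auto.
Qed.

(* Taylor bounds at 1/16, squared three times. *)
Lemma exp_mhalf_bounds : 0.60649 <= exp (- (1 / 2)) <= 0.60677.
Proof.
  assert (Hsq : forall a, exp (- a) * exp (- a) = exp (- (2 * a)))
    by (intros a; rewrite <- exp_plus; f_equal; ring).
  pose proof (exp_opp_ge (1 / 16) ltac:(lra)). pose proof (exp_opp_le (1 / 16) ltac:(lra)).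
  assert (B1 : 0.88249 <= exp (- (2 * (1 / 16))) <= 0.88258).
  { rewrite <- Hsq. pose proof (sqr_bounds (1 - 1/16 + 1/16 * (1/16) / 2 - 1/16 * (1/16) * (1/16) / 6)
      (1 - 1/16 + 1/16 * (1/16) / 2) (exp (- (1 / 16))) ltac:(lra) ltac:(lra)). lra. }
  assert (B2 : 0.77878 <= exp (- (2 * (2 * (1 / 16)))) <= 0.77895).
  { rewrite <- Hsq. pose proof (sqr_bounds 0.88249 0.88258 _ ltac:(lra) B1). lra. }
  replace (1 / 2) with (2 * (2 * (2 * (1 / 16)))) by field.
  rewrite <- Hsq. pose proof (sqr_bounds 0.77878 0.77895 _ ltac:(lra) B2). lra.
Qed.

Lemma gauss_sqrt_half_pow n : gauss (sqrt (INR n / 2)) = exp (- (1 / 2)) ^ n.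
Proof.
  unfold gauss. rewrite sqrt_sqrt by (apply Rdiv_le_0_compat; [apply pos_INR|lra]).
  induction n as [|n IH].
  - simpl. rewrite <- exp_0. f_equal. field.
  - rewrite S_INR, <- tech_pow_Rmult, <- IH, <- exp_plus. f_equal. field.
Qed.

Lemma gauss_sqrt_half_bounds n :
  0.60649 ^ n <= gauss (sqrt (INR n / 2)) <= 0.60677 ^ n.
Proof.
  rewrite gauss_sqrt_half_pow. pose proof exp_mhalf_bounds.
  split; apply pow_incr; lra.
Qed.

Lemma gauss_samples :
  0.36783 <= gauss 1 <= 0.36817 /\ 0.223085 <= gauss (sqrt 1.5) <= 0.223395 /\
  0.135298 <= gauss (sqrt 2) <= 0.13555 /\ 0.049767 <= gauss (sqrt 3) <= 0.049906 /\
  0.018305 <= gauss 2 <= 0.018374.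
Proof.
  pose proof (gauss_sqrt_half_bounds 2) as G2. pose proof (gauss_sqrt_half_bounds 3) as G3.
  pose proof (gauss_sqrt_half_bounds 4) as G4. pose proof (gauss_sqrt_half_bounds 6) as G6.
  pose proof (gauss_sqrt_half_bounds 8) as G8.
  replace (INR 2 / 2) with (1 * 1) in G2 by (simpl; lra).
  replace (INR 3 / 2) with 1.5 in G3 by (simpl; lra).
  replace (INR 4 / 2) with 2 in G4 by (simpl; lra).
  replace (INR 6 / 2) with 3 in G6 by (simpl; lra).
  replace (INR 8 / 2) with (2 * 2) in G8 by (simpl; lra).
  rewrite sqrt_square in G2, G8 by lra. simpl in *. repeat split; lra.
Qed.

Lemma div_le_div a b c d : 0 <= a <= b -> 0 < c <= d -> a / d <= b / c.
Proof.
  intros [ha hab] [hc hcd]. apply Rmult_le_compat; auto.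
  - left. apply Rinv_0_lt_compat. lra.
  - apply Rinv_le_contravar; lra.
Qed.

Lemma gauss_int_2_sub_1_ge : 0.12238 <= gauss_int 2 - gauss_int 1.
Proof.
  destruct gauss_samples as (G1 & G15 & G2 & G3 & G4).
  assert (S15 : 1.2247 <= sqrt 1.5 <= 1.2248) by (apply sqrt_bounds; lra).
  assert (S2 : 1.4142 <= sqrt 2 <= 1.4143) by (apply sqrt_bounds; lra).
  assert (S3 : 1.7320 <= sqrt 3 <= 1.7321) by (apply sqrt_bounds; lra).
  pose proof (gauss_int_diff_ge 1 (sqrt 1.5) ltac:(lra)) as L1.
  pose proof (gauss_int_diff_ge (sqrt 1.5) (sqrt 2) ltac:(lra)) as L2.
  pose proof (gauss_int_diff_ge (sqrt 2) (sqrt 3) ltac:(lra)) as L3.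
  pose proof (gauss_int_diff_ge (sqrt 3) 2 ltac:(lra)) as L4.
  pose proof (div_le_div (0.36783 - 0.223395) (gauss 1 - gauss (sqrt 1.5)) (2 * sqrt 1.5) (2 * 1.2248)
    ltac:(lra) ltac:(lra)).
  pose proof (div_le_div (0.223085 - 0.13555) (gauss (sqrt 1.5) - gauss (sqrt 2)) (2 * sqrt 2)
    (2 * 1.4143) ltac:(lra) ltac:(lra)).
  pose proof (div_le_div (0.135298 - 0.049906) (gauss (sqrt 2) - gauss (sqrt 3)) (2 * sqrt 3)
    (2 * 1.7321) ltac:(lra) ltac:(lra)).
  pose proof (div_le_div (0.049767 - 0.018374) (gauss (sqrt 3) - gauss 2) (2 * 2) (2 * 2)
    ltac:(lra) ltac:(lra)).
  lra.
Qed.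

Lemma gauss_mass_le : gauss_mass <= 0.92916.
Proof.
  destruct gauss_samples as (G1 & _ & G2 & _ & G4).
  assert (S2 : 1.4142 <= sqrt 2 <= 1.4143) by (apply sqrt_bounds; lra).
  pose proof (gauss_mass_le_tail 2 ltac:(lra)).
  pose proof (gauss_int_diff_le 1 (sqrt 2) ltac:(lra)).
  pose proof (gauss_int_diff_le (sqrt 2) 2 ltac:(lra)).
  pose proof gauss_int_1_le.
  pose proof (div_le_div (gauss 1 - gauss (sqrt 2)) (0.36817 - 0.135298) (2 * 1) (2 * 1)
    ltac:(lra) ltac:(lra)).
  pose proof (div_le_div (gauss (sqrt 2) - gauss 2) (0.13555 - 0.018305) (2 * 1.4142) (2 * sqrt 2)
    ltac:(lra) ltac:(lra)).
  pose proof (div_le_div (gauss 2) 0.018374 (2 * 2) (2 * 2) ltac:(lra) ltac:(lra)).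
  lra.
Qed.

Lemma exp_const_nonneg : 0 <= (exp 1 - 1) / (sqrt PI * exp 1).
Proof.
  pose proof (exp_ineq1 1 ltac:(lra)). apply Rdiv_le_0_compat; [lra|].
  apply Rmult_lt_0_compat; [apply sqrt_lt_R0, PI_RGT_0 | lra].
Qed.

Lemma heat_tent_0_1_ge : (exp 1 - 1) / (sqrt PI * exp 1) + 1 / 32 <= heat_tent 0 1.
Proof.
  destruct gauss_samples as (G1 & _ & _ & _ & G4).
  pose proof gauss_int_2_sub_1_ge. pose proof gauss_mass_le. pose proof gauss_mass_ge.
  assert (Hscale : / (2 * 0.92916) <= cdf_scale) by (apply Rinv_le_contravar; lra).
  assert (Hsum : 0.4053 <= cdf_scale * (1 - 2 * gauss 1 + gauss 2 + 4 * (gauss_int 2 - gauss_int 1))).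
  { apply Rle_trans with (/ (2 * 0.92916) * 0.75318); [lra|].
    apply Rmult_le_compat; [left; apply Rinv_0_lt_compat| |..]; lra. }
  assert (Hpi : sqrt 3 <= sqrt PI) by (apply sqrt_le_1_alt; pose proof PI2_3_2; lra).
  assert (S3 : 1.7320 <= sqrt 3 <= 1.7321) by (apply sqrt_bounds; lra).
  assert (Hconst : (exp 1 - 1) / (sqrt PI * exp 1) = (1 - gauss 1) / sqrt PI).
  { unfold gauss. rewrite Rmult_1_l, exp_Ropp. pose proof (exp_pos 1). field. lra. }
  pose proof (div_le_div (1 - gauss 1) (1 - 0.36783) 1.732 (sqrt PI) ltac:(lra) ltac:(lra)).
  rewrite Hconst, heat_tent_0_1. lra.
Qed.

(** * Joint continuity *)

Lemma continuous2_iff (f : R -> R -> R) :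
  continuous2 f <-> forall x t, continuous (fun p : R * R => f (fst p) (snd p)) (x, t).
Proof.
  split.
  - intros H x t. apply filterlim_locally. intros e.
    destruct (H x t e (cond_pos e)) as [d [hd Hd]].
    exists (mkposreal d hd). intros [y s] [hy hs]. apply Hd; assumption.
  - intros H x t e he.
    destruct (proj1 (filterlim_locally _ _) (H x t) (mkposreal e he)) as [d Hd].
    exists d. split; [apply cond_pos|]. intros y s hy hs. apply (Hd (y, s)). split; assumption.
Qed.

Lemma continuous2_const c : continuous2 (fun _ _ => c).
Proof. apply continuous2_iff. intros. apply continuous_const. Qed.

Lemma continuous2_fst : continuous2 (fun x _ => x).
Proof. apply continuous2_iff. intros. apply continuous_fst. Qed.

Lemma continuous2_snd : continuous2 (fun _ t => t).
Proof. apply continuous2_iff. intros. apply continuous_snd. Qed.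

Lemma continuous2_plus f g :
  continuous2 f -> continuous2 g -> continuous2 (fun x t => f x t + g x t).
Proof.
  rewrite !continuous2_iff. intros Hf Hg x t.
  exact (continuous_plus _ _ _ (Hf x t) (Hg x t)).
Qed.

Lemma continuous2_opp f : continuous2 f -> continuous2 (fun x t => - f x t).
Proof. rewrite !continuous2_iff. intros Hf x t. exact (continuous_opp _ _ (Hf x t)). Qed.

Lemma continuous2_minus f g :
  continuous2 f -> continuous2 g -> continuous2 (fun x t => f x t - g x t).
Proof. intros Hf Hg. apply (continuous2_plus f (fun x t => - g x t)), continuous2_opp; auto. Qed.

Lemma continuous2_mult f g :
  continuous2 f -> continuous2 g -> continuous2 (fun x t => f x t * g x t).
Proof.
  rewrite !continuous2_iff. intros Hf Hg x t.
  exact (continuous_mult _ _ _ (Hf x t) (Hg x t)).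
Qed.

Lemma continuous2_div_const f c : continuous2 f -> continuous2 (fun x t => f x t / c).
Proof. intros Hf. apply (continuous2_mult f (fun _ _ => / c)), continuous2_const; auto. Qed.

Lemma continuous2_comp (h : R -> R) A :
  (forall z, continuity_pt h z) -> continuous2 A -> continuous2 (fun x t => h (A x t)).
Proof.
  intros Hh. rewrite !continuous2_iff. intros HA x t.
  apply (continuous_comp (fun p : R * R => A (fst p) (snd p)) h); auto.
  apply continuity_pt_filterlim, Hh.
Qed.

Ltac continuous2_step :=
  first [ apply continuous2_const | apply continuous2_fst | apply continuous2_snd
  | match goal with
    | |- continuous2 Rminus => apply (continuous2_minus (fun x _ => x) (fun _ t => t))
    | |- continuous2 (fun x t => _ + _) => apply continuous2_plus
    | |- continuous2 (fun x t => _ - _) => apply continuous2_minus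
    | |- continuous2 (fun x t => - _) => apply continuous2_opp
    | |- continuous2 (fun x t => _ * _) => apply continuous2_mult
    | |- continuous2 (fun x t => _ / _) => apply continuous2_div_const
    | |- continuous2 (fun x t => _ _) => apply continuous2_comp
    end ].
Ltac continuous2_tac := repeat (first [assumption | continuous2_step]).

(** * Comparison with strict sub- and supersolutions *)

Definition UC_half (f : R -> R -> R) : Prop :=
  forall e, 0 < e -> exists d, 0 < d /\
    forall x t y s, 0 <= t -> 0 <= s -> Rabs (y - x) < d -> Rabs (s - t) < d ->
      Rabs (f y s - f x t) < e.

Lemma UC_half_minus f g : UC_half f -> UC_half g -> UC_half (fun x t => f x t - g x t).
Proof.
  intros Hf Hg e he.
  destruct (Hf (e / 2) ltac:(lra)) as [d1 [h1 H1]]. destruct (Hg (e / 2) ltac:(lra)) as [d2 [h2 H2]].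
  exists (Rmin d1 d2). split; [apply Rmin_pos; auto|]. intros x t y s ht hs hy hst.
  apply Rmin_Rgt in hy as [hy1 hy2]. apply Rmin_Rgt in hst as [hs1 hs2].
  specialize (H1 x t y s ht hs hy1 hs1). specialize (H2 x t y s ht hs hy2 hs2).
  replace (f y s - g y s - (f x t - g x t)) with ((f y s - f x t) - (g y s - g x t)) by ring.
  eapply Rle_lt_trans; [apply Rabs_triang|]. rewrite Rabs_Ropp. lra.
Qed.

Lemma UC_half_of_derive_bounds (f fx ft : R -> R -> R) Lx Lt :
  0 < Lx -> 0 < Lt ->
  (forall x t, is_derive (fun y => f y t) x (fx x t)) ->
  (forall x t, is_derive (fun s => f x s) t (ft x t)) ->
  (forall x t, 0 <= t -> Rabs (fx x t) <= Lx) ->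
  (forall x t, 0 <= t -> Rabs (ft x t) <= Lt) -> UC_half f.
Proof.
  intros hLx hLt Hx Ht Bx Bt e he.
  exists (Rmin (e / (2 * Lx)) (e / (2 * Lt))). split.
  { apply Rmin_pos; apply Rdiv_lt_0_compat; lra. }
  intros x t y s ht hs hy hst. apply Rmin_Rgt in hy as [hy _]. apply Rmin_Rgt in hst as [_ hst].
  assert (A1 : Rabs (f y s - f x s) <= Lx * Rabs (y - x)).
  { apply (Rabs_diff_le_of_derive (fun y => f y s) (fun y => fx y s)); auto. }
  assert (A2 : Rabs (f x s - f x t) <= Lt * Rabs (s - t)).
  { apply (Rabs_diff_le_of_derive (fun s => f x s) (fun s => ft x s)); [apply Ht|].
    intros z hz. apply Bt. pose proof (Rmin_glb _ _ _ ht hs). lra. }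
  replace (f y s - f x t) with ((f y s - f x s) + (f x s - f x t)) by ring.
  eapply Rle_lt_trans; [apply Rabs_triang|].
  apply Rmult_lt_compat_l with (r := Lx) in hy; [|lra].
  apply Rmult_lt_compat_l with (r := Lt) in hst; [|lra].
  replace (Lx * (e / (2 * Lx))) with (e / 2) in hy by (field; lra).
  replace (Lt * (e / (2 * Lt))) with (e / 2) in hst by (field; lra).
  lra.
Qed.

Lemma continuity_pt_of_eps_delta (f : R -> R) x0 :
  (forall e, 0 < e -> exists d, 0 < d /\ forall x, Rabs (x - x0) < d -> Rabs (f x - f x0) < e) ->
  continuity_pt f x0.
Proof.
  intros H e he. destruct (H e he) as [d [hd Hd]]. exists d. split; auto.
  intros x [_ hx]. apply Hd, hx.
Qed.

Lemma UC_half_max_in_x (Phi : R -> R -> R) Rr t : 0 < Rr -> 0 <= t -> UC_half Phi ->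
  exists x0, -Rr <= x0 <= Rr /\ forall x, -Rr <= x <= Rr -> Phi x t <= Phi x0 t.
Proof.
  intros hR ht HU.
  destruct (continuity_ab_maj (fun y => Phi y t) (-Rr) Rr) as [x0 [Hmax Hx0]]; [lra| |].
  - intros c _. apply continuity_pt_of_eps_delta. intros e he.
    destruct (HU e he) as [d [hd Hd]]. exists d. split; auto. intros x hx.
    apply Hd; auto. rewrite Rminus_diag, Rabs_R0. exact hd.
  - exists x0. split; auto.
Qed.

(* continuity_ab_maj needs continuity on all of R, while UC_half only controls t >= 0. *)
Definition clamp (T t : R) : R := Rmax 0 (Rmin T t).

Lemma clamp_range T t : 0 <= T -> 0 <= clamp T t <= T.
Proof. intros h. unfold clamp, Rmax, Rmin. destruct (Rle_dec T t); destruct (Rle_dec 0 _); lra. Qed.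

Lemma clamp_id T t : 0 <= t <= T -> clamp T t = t.
Proof. intros h. unfold clamp, Rmax, Rmin. destruct (Rle_dec T t); destruct (Rle_dec 0 _); lra. Qed.

Lemma clamp_lip T s t : 0 <= T -> Rabs (clamp T s - clamp T t) <= Rabs (s - t).
Proof.
  intros h. unfold clamp, Rmax, Rmin.
  destruct (Rle_dec T s); destruct (Rle_dec T t); repeat destruct (Rle_dec 0 _);
  unfold Rabs; repeat destruct (Rcase_abs _); lra.
Qed.

Lemma UC_half_max_on_box (Phi : R -> R -> R) Rr T :
  0 < Rr -> 0 < T -> UC_half Phi ->
  exists x0 t0, -Rr <= x0 <= Rr /\ 0 <= t0 <= T /\
    forall x t, -Rr <= x <= Rr -> 0 <= t <= T -> Phi x t <= Phi x0 t0.
Proof.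
  intros hR hT HU.
  destruct (functional_choice (fun t x => -Rr <= x <= Rr /\
     forall y, -Rr <= y <= Rr -> Phi y (clamp T t) <= Phi x (clamp T t))) as [xm Hxm].
  { intros t. apply UC_half_max_in_x; auto. apply clamp_range. lra. }
  set (m := fun t => Phi (xm t) (clamp T t)).
  destruct (continuity_ab_maj m 0 T) as [t0 [Hm Ht0]]; [lra| |].
  - intros c _. apply continuity_pt_of_eps_delta. intros e he.
    destruct (HU (e / 2) ltac:(lra)) as [d [hd Hd]]. exists d. split; auto. intros s hs.
    pose proof (clamp_range T s ltac:(lra)). pose proof (clamp_range T c ltac:(lra)).
    pose proof (clamp_lip T s c ltac:(lra)).
    destruct (Hxm s) as [xs Hs]. destruct (Hxm c) as [xc Hc].
    assert (A1 : Rabs (Phi (xm c) (clamp T s) - Phi (xm c) (clamp T c)) < e / 2).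
    { apply Hd; try lra. rewrite Rminus_diag, Rabs_R0. exact hd. }
    assert (A2 : Rabs (Phi (xm s) (clamp T c) - Phi (xm s) (clamp T s)) < e / 2).
    { apply Hd; try lra. rewrite Rminus_diag, Rabs_R0. exact hd. rewrite Rabs_minus_sym. lra. }
    specialize (Hs (xm c) xc). specialize (Hc (xm s) xs).
    unfold m. apply Rabs_def2 in A1. apply Rabs_def2 in A2. apply Rabs_def1; lra.
  - exists (xm t0), t0. destruct (Hxm t0) as [H0 _]. repeat split; try apply H0; try apply Ht0.
    intros x t hx ht. specialize (Hm t ht). destruct (Hxm t) as [_ H1]. specialize (H1 x hx).
    unfold m in Hm. rewrite (clamp_id T t ht) in H1, Hm. rewrite (clamp_id T t0 Ht0) in Hm. lra.
Qed.

Definition below_off_box (v w : R -> R -> R) : Prop :=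
  exists Rr T, 0 < Rr /\ 0 < T /\
    forall x t, 0 <= t -> (Rr <= Rabs x \/ T <= t) -> v x t < w x t.

Lemma UC_half_interior_max (v w : R -> R -> R) x1 t1 :
  UC_half v -> UC_half w -> (forall x, v x 0 <= w x 0) -> below_off_box v w ->
  0 <= t1 -> w x1 t1 < v x1 t1 ->
  exists x0 t0, 0 < t0 /\ forall x t, 0 <= t -> v x t - w x t <= v x0 t0 - w x0 t0.
Proof.
  intros Hv Hw H0 [Rr [T [hR [hT Hout]]]] ht1 Hgt.
  destruct (UC_half_max_on_box (fun x t => v x t - w x t) Rr T hR hT (UC_half_minus v w Hv Hw))
    as [x0 [t0 [hx0 [ht0 Hmax]]]].
  assert (Hin : forall x t, 0 <= t -> w x t < v x t -> -Rr <= x <= Rr /\ t <= T).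
  { intros x t ht Hxt. destruct (Rle_dec Rr (Rabs x)) as [a|a];
      [specialize (Hout x t ht (or_introl a)); lra|].
    destruct (Rle_dec T t) as [b|b]; [specialize (Hout x t ht (or_intror b)); lra|].
    split; [apply Rabs_le_between|]; lra. }
  assert (Hpos : 0 < v x0 t0 - w x0 t0).
  { destruct (Hin x1 t1 ht1 Hgt). specialize (Hmax x1 t1 ltac:(auto) ltac:(lra)). lra. }
  exists x0, t0. split.
  - destruct ht0 as [[ht0|<-] _]; [exact ht0|]. specialize (H0 x0). lra.
  - intros x t ht. destruct (Rlt_le_dec (w x t) (v x t)) as [Hxt|Hxt]; [|lra].
    destruct (Hin x t ht Hxt). apply Hmax; auto.
Qed.

Lemma viscous_sol_ge_strict_sub (F : R -> R) (eps : R) (g0 : R -> R) (ue V Vt Vx Vxx : R -> R -> R) :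
  visc_sol_viscous F eps g0 ue -> BUC_half ue -> C12_with V Vt Vx Vxx -> UC_half V ->
  (forall x, V x 0 <= g0 x) ->
  (forall x t, 0 < t -> Vt x t + F (Vx x t) - eps * Vxx x t < 0) ->
  below_off_box V ue -> forall x t, 0 <= t -> V x t <= ue x t.
Proof.
  intros [Hinit [_ [_ Hsuper]]] [_ HU] HC HV H0 Hsub Hbox x1 t1 ht1.
  destruct (Rle_lt_dec (V x1 t1) (ue x1 t1)) as [ok|Hgt]; [exact ok|exfalso].
  destruct (UC_half_interior_max V ue x1 t1 HV HU) as [x0 [t0 [ht0 Hmax]]]; auto.
  { intros x. rewrite Hinit. apply H0. }
  enough (Vt x0 t0 + F (Vx x0 t0) - eps * Vxx x0 t0 >= 0) by (specialize (Hsub x0 t0 ht0); lra).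
  apply (Hsuper V Vt Vx Vxx x0 t0 ht0 HC).
  exists 1. split; [lra|]. intros x t ht _ _. specialize (Hmax x t ltac:(lra)). lra.
Qed.

Lemma HJ_sol_le_strict_super (F : R -> R) (g0 : R -> R) (u w wt wx : R -> R -> R) :
  visc_sol_HJ F g0 u -> BUC_half u -> C1_with w wt wx -> UC_half w ->
  (forall x, g0 x <= w x 0) ->
  (forall x t, 0 < t -> 0 < wt x t + F (wx x t)) ->
  below_off_box u w -> forall x t, 0 <= t -> u x t <= w x t.
Proof.
  intros [Hinit [_ [Hsub _]]] [_ HU] HC HW H0 Hsuper Hbox x1 t1 ht1.
  destruct (Rle_lt_dec (u x1 t1) (w x1 t1)) as [ok|Hgt]; [exact ok|exfalso].
  destruct (UC_half_interior_max u w x1 t1 HU HW) as [x0 [t0 [ht0 Hmax]]]; auto.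
  { intros x. rewrite Hinit. apply H0. }
  enough (wt x0 t0 + F (wx x0 t0) <= 0) by (specialize (Hsuper x0 t0 ht0); lra).
  apply (Hsub w wt wx x0 t0 ht0 HC).
  exists 1. split; [lra|]. intros x t ht _ _. apply Hmax. lra.
Qed.

(** * The inviscid solution at (0, 1) *)

Section Hamiltonian.
Variables (F : R -> R) (L : R).
Hypothesis HL : forall p q, Rabs p <= 2 -> Rabs q <= 2 -> Rabs (F p - F q) <= L * Rabs (p - q).
Hypothesis F_id : forall p, 0 <= p <= 1 -> F p = p.
Hypothesis F_le_id : forall p, -1 <= p <= 0 -> F p <= p.

Lemma lip_const_nonneg : 0 <= L.
Proof.
  pose proof (HL 1 0 ltac:(rewrite Rabs_R1; lra) ltac:(rewrite Rabs_R0; lra)).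
  rewrite (F_id 1), (F_id 0), Rminus_0_r, Rabs_R1 in H by lra. lra.
Qed.

Lemma F_upper_bound p a : 0 <= a <= 1 -> -1 - a <= p <= 1 + a -> F p <= p + (L + 1) * a.
Proof.
  intros ha hp. pose proof lip_const_nonneg.
  destruct (Rle_dec 0 p); [destruct (Rle_dec p 1)|destruct (Rle_dec (-1) p)].
  - rewrite F_id by lra. nra.
  - pose proof (HL p 1 ltac:(apply Rabs_le; lra) ltac:(rewrite Rabs_R1; lra)).
    rewrite (F_id 1), (Rabs_right (p - 1)) in H0 by lra.
    pose proof (Rle_abs (F p - 1)). nra.
  - pose proof (F_le_id p ltac:(lra)). nra.
  - pose proof (HL p (-1) ltac:(apply Rabs_le; lra) ltac:(apply Rabs_le; lra)).
    pose proof (F_le_id (-1) ltac:(lra)).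
    rewrite (Rabs_left (p - -1)) in H0 by lra.
    pose proof (Rle_abs (F p - F (-1))). nra.
Qed.

Lemma F_lower_bound p a : 0 <= a <= 1 -> - a <= p <= 1 + a -> p - (L + 1) * a <= F p.
Proof.
  intros ha hp. pose proof lip_const_nonneg.
  destruct (Rle_dec 0 p); [destruct (Rle_dec p 1)|].
  - rewrite F_id by lra. nra.
  - pose proof (HL p 1 ltac:(apply Rabs_le; lra) ltac:(rewrite Rabs_R1; lra)).
    rewrite (F_id 1), (Rabs_right (p - 1)) in H0 by lra.
    pose proof (Rle_abs (- (F p - 1))). rewrite Rabs_Ropp in H1. nra.
  - pose proof (HL p 0 ltac:(apply Rabs_le; lra) ltac:(rewrite Rabs_R0; lra)).
    rewrite (F_id 0), !Rminus_0_r, (Rabs_left p) in H0 by lra.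
    pose proof (Rle_abs (- F p)). rewrite Rabs_Ropp in H1. nra.
Qed.

End Hamiltonian.

Definition jbr (x : R) : R := sqrt (1 + x * x).
Definition jbr_d (x : R) : R := x / jbr x.
Definition jbr_dd (x : R) : R := / ((1 + x * x) * jbr x).

Lemma jbr_ge_1 x : 1 <= jbr x.
Proof. unfold jbr. rewrite <- sqrt_1 at 1. apply sqrt_le_1_alt. nra. Qed.

Lemma jbr_ge_abs x : Rabs x <= jbr x.
Proof. unfold jbr. rewrite <- sqrt_Rsqr_abs. apply sqrt_le_1_alt. unfold Rsqr. nra. Qed.

Lemma jbr_0 : jbr 0 = 1.
Proof. unfold jbr. rewrite Rmult_0_l, Rplus_0_r. apply sqrt_1. Qed.

Lemma is_derive_jbr x : is_derive jbr x (jbr_d x).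
Proof.
  unfold jbr_d, jbr. auto_derive; [nra|]. pose proof (jbr_ge_1 x). unfold jbr in H. field. lra.
Qed.

Lemma jbr_d_range x : -1 <= jbr_d x <= 1.
Proof.
  apply Rabs_le_between. pose proof (jbr_ge_1 x). pose proof (jbr_ge_abs x).
  unfold jbr_d. rewrite Rabs_div by lra. rewrite (Rabs_right (jbr x)) by lra.
  apply Rle_div_l; lra.
Qed.

Lemma is_derive_jbr_d x : is_derive jbr_d x (jbr_dd x).
Proof.
  unfold jbr_d, jbr_dd. pose proof (jbr_ge_1 x).
  auto_derive; [split; [eexists; apply is_derive_jbr|lra]|].
  rewrite (Derive_of_is_derive jbr x _ (is_derive_jbr x)). unfold jbr_d.
  assert (jbr x * jbr x = 1 + x * x) by (unfold jbr; apply sqrt_sqrt; nra).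
  transitivity ((jbr x * jbr x - x * x) / (jbr x * jbr x * jbr x)); [field; lra|].
  rewrite H0. field. split; [lra|nra].
Qed.

Lemma jbr_dd_range x : 0 < jbr_dd x <= 1.
Proof.
  unfold jbr_dd. pose proof (jbr_ge_1 x). assert (1 <= 1 + x * x) by nra.
  split; [apply Rinv_0_lt_compat; nra|].
  rewrite <- Rinv_1. apply Rinv_le_contravar; nra.
Qed.

Lemma jbr_cont x : continuity_pt jbr x.
Proof. apply continuity_pt_ex_derive. eexists. apply is_derive_jbr. Qed.

Lemma jbr_d_cont x : continuity_pt jbr_d x.
Proof. apply continuity_pt_ex_derive. eexists. apply is_derive_jbr_d. Qed.

Lemma jbr_dd_cont x : continuity_pt jbr_dd x.
Proof.
  apply continuity_pt_ex_derive. unfold jbr_dd. pose proof (jbr_ge_1 x).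
  auto_derive. repeat split; [eexists; apply is_derive_jbr|nra].
Qed.

Definition sigmoid (y : R) : R := exp y / (1 + exp y).

Lemma sigmoid_range y : 0 < sigmoid y < 1.
Proof.
  unfold sigmoid. pose proof (exp_pos y).
  split; [apply Rdiv_lt_0_compat|apply Rlt_div_l]; lra.
Qed.

Lemma sigmoid_cont y : continuity_pt sigmoid y.
Proof.
  apply continuity_pt_ex_derive. unfold sigmoid. auto_derive. pose proof (exp_pos y). lra.
Qed.

Definition softplus (y : R) : R := ln (1 + exp y).

Lemma softplus_ge y : Rmax y 0 <= softplus y.
Proof.
  unfold softplus. pose proof (exp_pos y). apply Rmax_lub.
  - rewrite <- (ln_exp y) at 1. apply ln_le; [apply exp_pos|lra].
  - rewrite <- ln_1. apply ln_le; lra.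
Qed.

Lemma softplus_cont y : continuity_pt softplus y.
Proof.
  apply continuity_pt_ex_derive. unfold softplus. auto_derive. pose proof (exp_pos y). lra.
Qed.

Lemma softplus_0 : softplus 0 = ln 2.
Proof. unfold softplus. rewrite exp_0. replace (1 + 1) with 2 by ring. reflexivity. Qed.

Section HJ_supersolution.
Variables c a : R.
Hypothesis hc : 0 < c.
Hypothesis ha : 0 < a <= 1.

(* A smoothing of max(1 + x - t, 0) >= g(x - t), made confining by a jbr x and strict by c (1 + t). *)
Definition HJ_super (x t : R) : R := c * softplus ((x - t + 1) / c) + a * jbr x + c * (1 + t).
Definition HJ_super_x (x t : R) : R := sigmoid ((x - t + 1) / c) + a * jbr_d x.
Definition HJ_super_t (x t : R) : R := - sigmoid ((x - t + 1) / c) + c.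

Lemma is_derive_HJ_super_t x t : is_derive (fun s => HJ_super x s) t (HJ_super_t x t).
Proof.
  unfold HJ_super, HJ_super_t, softplus, sigmoid.
  pose proof (exp_pos ((x - t + 1) / c)). unfold Rminus, Rdiv in *.
  auto_derive; [repeat split; lra|].
  set (Z := exp _) in *. field. lra.
Qed.

Lemma is_derive_HJ_super_x x t : is_derive (fun y => HJ_super y t) x (HJ_super_x x t).
Proof.
  unfold HJ_super, HJ_super_x, softplus, sigmoid.
  pose proof (exp_pos ((x - t + 1) / c)). unfold Rminus, Rdiv in *.
  auto_derive; [repeat split; try lra; eexists; apply is_derive_jbr|].
  rewrite (Derive_of_is_derive jbr x _ (is_derive_jbr x)).
  set (Z := exp _) in *. field. lra.
Qed.

Lemma HJ_super_C1 : C1_with HJ_super HJ_super_t HJ_super_x.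
Proof.
  repeat split.
  - intros x t. apply is_derive_Reals, is_derive_HJ_super_t.
  - intros x t. apply is_derive_Reals, is_derive_HJ_super_x.
  - unfold HJ_super. continuous2_tac; auto using softplus_cont, jbr_cont.
  - unfold HJ_super_t. continuous2_tac; auto using sigmoid_cont.
  - unfold HJ_super_x. continuous2_tac; auto using sigmoid_cont, jbr_d_cont.
Qed.

Lemma HJ_super_UC : UC_half HJ_super.
Proof.
  apply (UC_half_of_derive_bounds HJ_super HJ_super_x HJ_super_t (1 + a) (1 + c)); try lra.
  - apply is_derive_HJ_super_x.
  - apply is_derive_HJ_super_t.
  - intros x t _. unfold HJ_super_x. pose proof (sigmoid_range ((x - t + 1) / c)).
    pose proof (jbr_d_range x). apply Rabs_le. nra.
  - intros x t _. unfold HJ_super_t. pose proof (sigmoid_range ((x - t + 1) / c)).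
    apply Rabs_le. lra.
Qed.

Lemma HJ_super_init x : g x <= HJ_super x 0.
Proof.
  unfold HJ_super, g. rewrite Rminus_0_r. pose proof (jbr_ge_1 x).
  assert (Hpos : 0 <= softplus ((x + 1) / c))
    by (eapply Rle_trans; [apply Rmax_r | apply softplus_ge]).
  assert (Hlin : (x + 1) / c <= softplus ((x + 1) / c))
    by (eapply Rle_trans; [apply Rmax_l | apply softplus_ge]).
  apply (Rmult_le_compat_l c) in Hlin; [|lra].
  replace (c * ((x + 1) / c)) with (1 + x) in Hlin by (field; lra).
  pose proof (Rle_abs (- x)). rewrite Rabs_Ropp in H0.
  apply Rmax_lub; nra.
Qed.

Lemma HJ_super_strict (F : R -> R) (L : R) :
  (forall p q, Rabs p <= 2 -> Rabs q <= 2 -> Rabs (F p - F q) <= L * Rabs (p - q)) ->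
  (forall p, 0 <= p <= 1 -> F p = p) -> (L + 2) * a < c ->
  forall x t, 0 < HJ_super_t x t + F (HJ_super_x x t).
Proof.
  intros HL F_id hLa x t. unfold HJ_super_t, HJ_super_x.
  pose proof (sigmoid_range ((x - t + 1) / c)). pose proof (jbr_d_range x).
  set (p := sigmoid ((x - t + 1) / c) + a * jbr_d x).
  pose proof (F_lower_bound F L HL F_id p a ltac:(lra) ltac:(unfold p; nra)).
  unfold p in *. nra.
Qed.

Lemma HJ_super_off_box (u : R -> R -> R) : BUC_half u -> below_off_box u HJ_super.
Proof.
  intros [[M HM] _].
  assert (hM : 0 <= M) by (specialize (HM 0 0 ltac:(lra)); pose proof (Rabs_pos (u 0 0)); lra).
  exists (M / a + 1), (M / c + 1).
  repeat split; [apply Rplus_le_lt_0_compat, Rlt_0_1; apply Rdiv_le_0_compat; lra ..|].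
  intros x t ht hout. specialize (HM x t ht). pose proof (Rle_abs (u x t)).
  unfold HJ_super. pose proof (softplus_ge ((x - t + 1) / c)).
  assert (0 <= c * softplus ((x - t + 1) / c))
    by (apply Rmult_le_pos; [lra|]; eapply Rle_trans; [apply Rmax_r|eauto]).
  pose proof (jbr_ge_abs x). pose proof (jbr_ge_1 x).
  destruct hout as [hx|ht2].
  - apply (Rmult_le_compat_l a) in hx; [|lra].
    replace (a * (M / a + 1)) with (M + a) in hx by (field; lra). nra.
  - apply (Rmult_le_compat_l c) in ht2; [|lra].
    replace (c * (M / c + 1)) with (M + c) in ht2 by (field; lra). nra.
Qed.

Lemma HJ_super_0_1 : HJ_super 0 1 = c * ln 2 + a + 2 * c.
Proof.
  unfold HJ_super. replace ((0 - 1 + 1) / c) with 0 by (field; lra).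
  rewrite softplus_0, jbr_0. ring.
Qed.

End HJ_supersolution.

Lemma ln_2_lt_1 : ln 2 < 1.
Proof.
  rewrite <- ln_exp. apply ln_increasing; [lra|].
  pose proof (exp_ineq1 1 ltac:(lra)). lra.
Qed.

Lemma HJ_sol_0_1_le (F : R -> R) (u : R -> R -> R) (c : R) :
  loc_lipschitz F -> (forall p, 0 <= p <= 1 -> F p = p) ->
  BUC_half u -> visc_sol_HJ F g u -> 0 < c <= 1 -> u 0 1 <= 4 * c.
Proof.
  intros Hlip F_id Hu Hsol hc. destruct (Hlip 2) as [L HL].
  pose proof (lip_const_nonneg F L HL F_id).
  set (a := c / (2 * (L + 2))).
  assert (ha : 0 < a <= c / 2).
  { split; [apply Rdiv_lt_0_compat; lra|].
    apply Rmult_le_compat_l; [lra|]. apply Rinv_le_contravar; lra. }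
  assert (haL : (L + 2) * a < c) by (unfold a; field_simplify; lra).
  assert (Hle : u 0 1 <= HJ_super c a 0 1).
  { apply (HJ_sol_le_strict_super F g u _ (HJ_super_t c) (HJ_super_x c a)); auto; try lra.
    - apply HJ_super_C1; lra.
    - apply HJ_super_UC; lra.
    - intros x. apply HJ_super_init; lra.
    - intros x t _. apply HJ_super_strict with (L := L); auto; lra.
    - apply HJ_super_off_box; auto; lra. }
  rewrite HJ_super_0_1 in Hle by lra. pose proof ln_2_lt_1. nra.
Qed.

(** * The viscous solution at (0, 1) *)

(* Named so that continuous2_tac sees functions of t alone. *)
Definition sqrt_comp (b : R -> R) (t : R) : R := sqrt (b t).
Definition inv_2sqrt_comp (b : R -> R) (t : R) : R := / (2 * sqrt (b t)).

Section Heat_continuity.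
Variable b : R -> R.
Hypothesis b_pos : forall t, 0 < b t.
Hypothesis b_der : forall t, ex_derive b t.

Lemma sqrt_comp_cont t : continuity_pt (sqrt_comp b) t.
Proof.
  apply continuity_pt_ex_derive. unfold sqrt_comp. auto_derive. auto.
Qed.

Lemma inv_2sqrt_comp_cont t : continuity_pt (inv_2sqrt_comp b) t.
Proof.
  apply continuity_pt_ex_derive. unfold inv_2sqrt_comp.
  assert (0 < sqrt (b t)) by apply sqrt_lt_R0, b_pos.
  auto_derive. repeat split; auto. lra.
Qed.

Lemma continuous2_heat_ramp A :
  continuous2 A -> continuous2 (fun x t => heat_ramp (A x t) (b t)).
Proof.
  intros HA.
  enough (continuous2 (fun x t => A x t * gauss_cdf (A x t * inv_2sqrt_comp b t)
    + sqrt_comp b t * cdf_scale * gauss (A x t * inv_2sqrt_comp b t))) by exact H.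
  continuous2_tac; auto using gauss_cdf_cont, gauss_cont, sqrt_comp_cont, inv_2sqrt_comp_cont.
Qed.

Lemma continuous2_heat_ramp_y A :
  continuous2 A -> continuous2 (fun x t => heat_ramp_y (A x t) (b t)).
Proof.
  intros HA. enough (continuous2 (fun x t => gauss_cdf (A x t * inv_2sqrt_comp b t))) by exact H.
  continuous2_tac; auto using gauss_cdf_cont, inv_2sqrt_comp_cont.
Qed.

Lemma continuous2_heat_ramp_yy A :
  continuous2 A -> continuous2 (fun x t => heat_ramp_yy (A x t) (b t)).
Proof.
  intros HA.
  enough (continuous2 (fun x t => cdf_scale * gauss (A x t * inv_2sqrt_comp b t) * inv_2sqrt_comp b t))
    by exact H.
  continuous2_tac; auto using gauss_cont, inv_2sqrt_comp_cont.
Qed.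

Lemma continuous2_second_diff (h : R -> R -> R) A :
  (forall A', continuous2 A' -> continuous2 (fun x t => h (A' x t) (b t))) -> continuous2 A ->
  continuous2 (fun x t => h (A x t) (b t) - 2 * h (A x t - 2) (b t) + h (A x t - 4) (b t)).
Proof.
  intros Hh HA. apply continuous2_plus; [apply continuous2_minus|].
  - apply Hh, HA.
  - apply continuous2_mult; [apply continuous2_const|].
    apply (Hh (fun x t => A x t - 2)). continuous2_tac; auto.
  - apply (Hh (fun x t => A x t - 4)). continuous2_tac; auto.
Qed.

Lemma continuous2_heat_tent A : continuous2 A -> continuous2 (fun x t => heat_tent (A x t) (b t)).
Proof. apply continuous2_second_diff, continuous2_heat_ramp. Qed.

Lemma continuous2_heat_tent_s A :
  continuous2 A -> continuous2 (fun x t => heat_tent_s (A x t) (b t)).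
Proof. apply continuous2_second_diff, continuous2_heat_ramp_y. Qed.

Lemma continuous2_heat_tent_ss A :
  continuous2 A -> continuous2 (fun x t => heat_tent_ss (A x t) (b t)).
Proof. apply continuous2_second_diff, continuous2_heat_ramp_yy. Qed.

End Heat_continuity.

(* A smooth clock within beta / 2 of max(t + tau, 0); being positive for every t, it keeps
   the subsolution below a C^{1,2} test function on all of R x R. *)
Definition soft_time (tau beta t : R) : R :=
  ((t + tau) + sqrt ((t + tau) * (t + tau) + beta * beta)) / 2.
Definition soft_time_d (tau beta t : R) : R :=
  (1 + (t + tau) / sqrt ((t + tau) * (t + tau) + beta * beta)) / 2.

Section Soft_time.
Variables tau beta : R.
Hypothesis hbeta : 0 < beta.

Lemma soft_time_rad_gt t : Rabs (t + tau) < sqrt ((t + tau) * (t + tau) + beta * beta).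
Proof.
  rewrite <- sqrt_Rsqr_abs. apply sqrt_lt_1_alt. unfold Rsqr.
  pose proof (Rmult_lt_0_compat _ _ hbeta hbeta). split; [apply Rle_0_sqr | lra].
Qed.

Lemma soft_time_rad_pos t : 0 < (t + tau) * (t + tau) + beta * beta.
Proof.
  pose proof (Rmult_lt_0_compat _ _ hbeta hbeta). pose proof (Rle_0_sqr (t + tau)).
  unfold Rsqr in *. lra.
Qed.

Lemma soft_time_pos t : 0 < soft_time tau beta t.
Proof.
  unfold soft_time. pose proof (soft_time_rad_gt t). pose proof (Rle_abs (- (t + tau))).
  rewrite Rabs_Ropp in H0. lra.
Qed.

Lemma is_derive_soft_time t : is_derive (soft_time tau beta) t (soft_time_d tau beta t).
Proof.
  unfold soft_time, soft_time_d. pose proof (soft_time_rad_gt t). pose proof (Rabs_pos (t + tau)).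
  pose proof (soft_time_rad_pos t). auto_derive; [lra|]. set (S := sqrt _) in *. field. lra.
Qed.

Lemma soft_time_d_cont t : continuity_pt (soft_time_d tau beta) t.
Proof.
  apply continuity_pt_ex_derive. unfold soft_time_d.
  pose proof (soft_time_rad_gt t). pose proof (Rabs_pos (t + tau)). pose proof (soft_time_rad_pos t).
  auto_derive. repeat split; lra.
Qed.

Lemma soft_time_ge t : 0 <= t + tau -> t + tau <= soft_time tau beta t.
Proof.
  intros h. unfold soft_time. pose proof (soft_time_rad_gt t).
  rewrite Rabs_right in H by lra. lra.
Qed.

Lemma soft_time_le t : 0 <= t + tau -> soft_time tau beta t <= t + tau + beta / 2.
Proof.
  intros h. unfold soft_time.
  enough (sqrt ((t + tau) * (t + tau) + beta * beta) <= t + tau + beta) by lra.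
  rewrite <- (sqrt_square (t + tau + beta)) by lra. apply sqrt_le_1_alt. nra.
Qed.

Lemma soft_time_d_range t : 0 < t + tau -> 0 <= soft_time_d tau beta t <= 1.
Proof.
  intros h. unfold soft_time_d. pose proof (soft_time_rad_gt t). rewrite Rabs_right in H by lra.
  assert (0 <= (t + tau) / sqrt ((t + tau) * (t + tau) + beta * beta) <= 1)
    by (split; [apply Rdiv_le_0_compat | apply Rle_div_l]; lra).
  lra.
Qed.

Lemma one_sub_soft_time_d_le t : 0 < t + tau ->
  1 - soft_time_d tau beta t <= beta * beta / (4 * ((t + tau) * (t + tau))).
Proof.
  intros hu. unfold soft_time_d. set (u := t + tau) in *.
  pose proof (soft_time_rad_gt t). fold u in H. rewrite Rabs_right in H by lra.
  set (S := sqrt (u * u + beta * beta)) in *.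
  assert (HS : S * S = u * u + beta * beta) by (apply sqrt_sqrt; nra).
  clearbody S.
  replace (1 - (1 + u / S) / 2) with (beta * beta / (2 * S * (S + u)))
    by (replace (beta * beta) with (S * S - u * u) by lra; field; lra).
  apply Rmult_le_compat_l; [nra|]. apply Rinv_le_contravar; nra.
Qed.

End Soft_time.

Lemma tent_scaled_le_g k x : 0 < k <= 1 / 2 -> k * tent ((x + 1) / k) <= g x.
Proof.
  intros hk. unfold tent, g.
  assert (E1 : k * ((x + 1) / k) = x + 1) by (field; lra).
  assert (E2 : k * (4 - (x + 1) / k) = 4 * k - (x + 1)) by (field; lra).
  unfold Rmax, Rmin, Rabs.
  destruct (Rle_dec ((x + 1) / k) (4 - (x + 1) / k)); destruct (Rle_dec 0 _);
    destruct (Rcase_abs x); destruct (Rle_dec _ 0); nra.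
Qed.

Section Viscous_subsolution.
Variables q r beta lam c1 al : R.
Hypothesis hq : 0 < q.
Hypothesis hr : 0 < r.
Hypothesis hbeta : 0 < beta.
Hypothesis hlam : 0 < lam.

Definition visc_xi (x t : R) : R := (x - t + 1) / (q * lam).
Definition visc_th (t : R) : R := soft_time (r * r) beta t / (lam * lam).

(* In the variables xi, th the heat flow of the tent solves V_t + V_x = eps V_xx
   up to the defect 1 - soft_time_d of the clock when q^2 = eps; the three
   correction terms make V a strict subsolution, below g at t = 0 and confined in x and t. *)
Definition visc_sub (x t : R) : R :=
  q * lam * heat_tent (visc_xi x t) (visc_th t) - q * cdf_scale * sqrt (soft_time (r * r) beta 0)
  - c1 * (1 + t) - al * jbr x.
Definition visc_sub_x (x t : R) : R := heat_tent_s (visc_xi x t) (visc_th t) - al * jbr_d x.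
Definition visc_sub_xx (x t : R) : R :=
  heat_tent_ss (visc_xi x t) (visc_th t) / (q * lam) - al * jbr_dd x.
Definition visc_sub_t (x t : R) : R :=
  - heat_tent_s (visc_xi x t) (visc_th t)
  + q * lam * heat_tent_ss (visc_xi x t) (visc_th t) * (soft_time_d (r * r) beta t / (lam * lam)) - c1.

Lemma visc_th_pos t : 0 < visc_th t.
Proof. unfold visc_th. apply Rdiv_lt_0_compat; [apply soft_time_pos; auto | nra]. Qed.

Lemma is_derive_visc_th t : is_derive visc_th t (soft_time_d (r * r) beta t / (lam * lam)).
Proof.
  unfold visc_th. pose proof (is_derive_soft_time (r * r) beta hbeta t).
  auto_derive; [eexists; eauto|]. rewrite (Derive_of_is_derive _ _ _ H). field. lra.
Qed.

Lemma is_derive_visc_xi_t x t : is_derive (fun s => visc_xi x s) t (- / (q * lam)).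
Proof. unfold visc_xi. auto_derive; [nra|]. field. lra. Qed.

Lemma is_derive_visc_xi_x x t : is_derive (fun y => visc_xi y t) x (/ (q * lam)).
Proof. unfold visc_xi. auto_derive; [nra|]. field. lra. Qed.

Lemma is_derive_visc_sub_t x t : is_derive (fun s => visc_sub x s) t (visc_sub_t x t).
Proof.
  pose (h := fun s => heat_tent (visc_xi x s) (visc_th s)).
  pose proof (is_derive_heat_tent_comp (fun s => visc_xi x s) visc_th _ _ t
    (is_derive_visc_xi_t x t) (is_derive_visc_th t) (visc_th_pos t)) as H.
  apply (is_derive_ext (fun s => q * lam * h s - q * cdf_scale * sqrt (soft_time (r * r) beta 0)
    - c1 * (1 + s) - al * jbr x)); [reflexivity|].
  auto_derive; [eexists; exact H|]. rewrite (Derive_of_is_derive h t _ H).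
  unfold visc_sub_t. field. lra.
Qed.

Lemma is_derive_visc_sub_x x t : is_derive (fun y => visc_sub y t) x (visc_sub_x x t).
Proof.
  pose (h := fun y => heat_tent (visc_xi y t) (visc_th t)).
  pose proof (is_derive_heat_tent_comp (fun y => visc_xi y t) (fun _ => visc_th t) _ 0 x
    (is_derive_visc_xi_x x t) (is_derive_const _ _) (visc_th_pos t)) as H.
  apply (is_derive_ext (fun y => q * lam * h y - q * cdf_scale * sqrt (soft_time (r * r) beta 0)
    - c1 * (1 + t) - al * jbr y)); [reflexivity|].
  auto_derive; [repeat split; eexists; first [exact H | apply is_derive_jbr]|].
  rewrite (Derive_of_is_derive h x _ H), (Derive_of_is_derive _ _ _ (is_derive_jbr x)).
  unfold visc_sub_x. field. lra.
Qed.

Lemma is_derive_visc_sub_x_x x t : is_derive (fun y => visc_sub_x y t) x (visc_sub_xx x t).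
Proof.
  pose (h := fun y => heat_tent_s (visc_xi y t) (visc_th t)).
  pose proof (is_derive_heat_tent_s_comp (fun y => visc_xi y t) (visc_th t) _ x
    (is_derive_visc_xi_x x t) (visc_th_pos t)) as H.
  apply (is_derive_ext (fun y => h y - al * jbr_d y)); [reflexivity|].
  auto_derive; [repeat split; eexists; first [exact H | apply is_derive_jbr_d]|].
  rewrite (Derive_of_is_derive h x _ H), (Derive_of_is_derive _ _ _ (is_derive_jbr_d x)).
  unfold visc_sub_xx. field. lra.
Qed.

Lemma visc_th_ex t : ex_derive visc_th t.
Proof. eexists. apply is_derive_visc_th. Qed.

Lemma visc_xi_cont : continuous2 visc_xi.
Proof. unfold visc_xi. continuous2_tac. Qed.

Lemma visc_sub_C12 : C12_with visc_sub visc_sub_t visc_sub_x visc_sub_xx.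
Proof.
  pose proof (continuous2_heat_tent visc_th visc_th_pos visc_th_ex visc_xi visc_xi_cont).
  pose proof (continuous2_heat_tent_s visc_th visc_th_pos visc_th_ex visc_xi visc_xi_cont).
  pose proof (continuous2_heat_tent_ss visc_th visc_th_pos visc_th_ex visc_xi visc_xi_cont).
  repeat split.
  - intros x t. apply is_derive_Reals, is_derive_visc_sub_t.
  - intros x t. apply is_derive_Reals, is_derive_visc_sub_x.
  - unfold visc_sub. continuous2_tac. apply jbr_cont.
  - unfold visc_sub_t. continuous2_tac. apply soft_time_d_cont, hbeta.
  - unfold visc_sub_x. continuous2_tac. apply jbr_d_cont.
  - intros x t. apply is_derive_Reals, is_derive_visc_sub_x_x.
  - unfold visc_sub_xx. continuous2_tac. apply jbr_dd_cont.
Qed.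

Lemma visc_drift_bound x t : 0 <= t ->
  Rabs (q / lam * heat_tent_ss (visc_xi x t) (visc_th t)) <= 2 * q * cdf_scale / r.
Proof.
  intros ht. pose proof (visc_th_pos t) as hth. pose proof cdf_scale_pos.
  assert (Hs : r / lam <= sqrt (visc_th t)).
  { rewrite <- (sqrt_square (r / lam)) by (apply Rdiv_le_0_compat; lra).
    apply sqrt_le_1_alt. unfold visc_th.
    pose proof (soft_time_ge (r * r) beta hbeta t ltac:(nra)).
    replace (r / lam * (r / lam)) with (r * r / (lam * lam)) by (field; lra).
    apply Rmult_le_compat_r; [left; apply Rinv_0_lt_compat|]; nra. }
  rewrite Rabs_mult, Rabs_right by (left; apply Rdiv_lt_0_compat; lra).
  apply Rle_trans with (q / lam * (2 * cdf_scale / sqrt (visc_th t))).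
  - apply Rmult_le_compat_l; [left; apply Rdiv_lt_0_compat; lra|]. apply heat_tent_ss_bound, hth.
  - replace (2 * q * cdf_scale / r) with (q / lam * (2 * cdf_scale / (r / lam))) by (field; lra).
    apply Rmult_le_compat_l; [left; apply Rdiv_lt_0_compat; lra|].
    apply Rmult_le_compat_l; [lra|]. apply Rinv_le_contravar; [apply Rdiv_lt_0_compat|]; lra.
Qed.

Lemma visc_sub_t_eq x t : visc_sub_t x t =
  - heat_tent_s (visc_xi x t) (visc_th t)
  + q / lam * heat_tent_ss (visc_xi x t) (visc_th t) * soft_time_d (r * r) beta t - c1.
Proof. unfold visc_sub_t. field. lra. Qed.

Lemma visc_sub_UC : q <= 1 -> 0 <= c1 <= 1 -> 0 <= al <= 1 -> UC_half visc_sub.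
Proof.
  intros hq1 hc1 hal. pose proof cdf_scale_le.
  apply (UC_half_of_derive_bounds visc_sub visc_sub_x visc_sub_t 2 (2 + 2 / r)); try lra.
  - pose proof (Rdiv_lt_0_compat 2 r ltac:(lra) hr). lra.
  - apply is_derive_visc_sub_x.
  - apply is_derive_visc_sub_t.
  - intros x t _. unfold visc_sub_x.
    pose proof (heat_tent_s_range (visc_xi x t) (visc_th t) (visc_th_pos t)).
    pose proof (jbr_d_range x). apply Rabs_le. nra.
  - intros x t ht. rewrite visc_sub_t_eq.
    pose proof (heat_tent_s_range (visc_xi x t) (visc_th t) (visc_th_pos t)).
    pose proof (soft_time_d_range (r * r) beta hbeta t ltac:(nra)).
    pose proof (visc_drift_bound x t ht) as Hd. apply Rabs_le_between in Hd.
    assert (2 * q * cdf_scale / r <= 2 / r)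
      by (apply Rmult_le_compat_r; [left; apply Rinv_0_lt_compat|]; nra).
    apply Rabs_le. nra.
Qed.

Lemma visc_sub_init : q * lam <= 1 / 2 -> 0 <= c1 -> 0 <= al -> forall x, visc_sub x 0 <= g x.
Proof.
  intros hql hc1 hal x. unfold visc_sub.
  pose proof (heat_tent_le_tent (visc_xi x 0) (visc_th 0) (visc_th_pos 0)) as Hle.
  assert (Hsq : sqrt (visc_th 0) = sqrt (soft_time (r * r) beta 0) / lam).
  { unfold visc_th. rewrite sqrt_div_alt by nra. rewrite sqrt_square by lra. reflexivity. }
  rewrite Hsq in Hle. apply (Rmult_le_compat_l (q * lam)) in Hle; [|nra].
  pose proof (tent_scaled_le_g (q * lam) x ltac:(split; nra)).
  unfold visc_xi in *. rewrite Rminus_0_r in *.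
  pose proof (jbr_ge_1 x).
  replace (q * lam * (tent ((x + 1) / (q * lam)) + sqrt (soft_time (r * r) beta 0) / lam * cdf_scale))
    with (q * lam * tent ((x + 1) / (q * lam)) + q * cdf_scale * sqrt (soft_time (r * r) beta 0))
    in Hle by (field; lra).
  assert (0 <= c1 * (1 + 0) + al * jbr x) by nra. lra.
Qed.

Lemma visc_clock_defect_bound x t : 0 <= t -> 2 * q * beta * beta <= c1 * (r * r * r * r * r) ->
  Rabs (q / lam * heat_tent_ss (visc_xi x t) (visc_th t) * (soft_time_d (r * r) beta t - 1))
    <= c1 / 4.
Proof.
  intros ht hsmall. pose proof cdf_scale_le. pose proof cdf_scale_pos.
  pose proof (visc_drift_bound x t ht) as Hd.
  pose proof (soft_time_d_range (r * r) beta hbeta t ltac:(nra)) as HT.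
  assert (HT1 : 1 - soft_time_d (r * r) beta t <= beta * beta / (4 * (r * r * (r * r)))).
  { eapply Rle_trans; [apply one_sub_soft_time_d_le; auto; nra|].
    apply Rmult_le_compat_l; [nra|]. pose proof (Rmult_lt_0_compat _ _ hr hr).
    apply Rinv_le_contravar; [nra|]. apply Rmult_le_compat_l; [lra|].
    apply Rmult_le_compat; lra. }
  rewrite Rabs_mult, (Rabs_left1 (_ - 1)) by lra.
  apply Rle_trans with (2 * q * cdf_scale / r * (beta * beta / (4 * (r * r * (r * r))))).
  - apply Rmult_le_compat; try lra; apply Rabs_pos.
  - replace (2 * q * cdf_scale / r * (beta * beta / (4 * (r * r * (r * r)))))
      with (cdf_scale * (2 * q * beta * beta) / (4 * (r * r * r * r * r))) by (field; lra).
    assert (0 < r * r * r * r * r) by (repeat apply Rmult_lt_0_compat; lra).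
    assert (0 <= 2 * q * beta * beta) by (repeat apply Rmult_le_pos; lra).
    apply Rle_div_l; [lra|].
    apply Rle_trans with (1 * (c1 * (r * r * r * r * r))); [apply Rmult_le_compat|]; lra.
Qed.

Lemma visc_sub_strict (F : R -> R) (L eps : R) :
  (forall p q, Rabs p <= 2 -> Rabs q <= 2 -> Rabs (F p - F q) <= L * Rabs (p - q)) ->
  (forall p, 0 <= p <= 1 -> F p = p) -> (forall p, -1 <= p <= 0 -> F p <= p) ->
  q * q = eps -> q <= 1 -> 0 < c1 -> 0 <= al <= 1 -> 2 * (L + 3) * al <= c1 ->
  2 * q * beta * beta <= c1 * (r * r * r * r * r) ->
  forall x t, 0 < t -> visc_sub_t x t + F (visc_sub_x x t) - eps * visc_sub_xx x t < 0.
Proof.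
  intros HL F_id F_le_id hqq hq1 hc1 hal hLal hsmall x t ht.
  pose proof (heat_tent_s_range (visc_xi x t) (visc_th t) (visc_th_pos t)).
  pose proof (jbr_d_range x). pose proof (jbr_dd_range x).
  assert (HF : F (visc_sub_x x t) <= visc_sub_x x t + (L + 1) * al).
  { apply (F_upper_bound F L HL F_id F_le_id); [lra|]. unfold visc_sub_x. nra. }
  pose proof (visc_clock_defect_bound x t ltac:(lra) hsmall) as Hdefect.
  apply Rabs_le_between in Hdefect.
  assert (Hid : visc_sub_t x t + visc_sub_x x t - eps * visc_sub_xx x t =
      q / lam * heat_tent_ss (visc_xi x t) (visc_th t) * (soft_time_d (r * r) beta t - 1)
      - c1 - al * jbr_d x + eps * al * jbr_dd x).
  { rewrite visc_sub_t_eq. unfold visc_sub_x, visc_sub_xx. rewrite <- hqq. field. lra. }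
  assert (Heps : 0 <= eps <= 1) by (rewrite <- hqq; split; nra).
  assert (eps * al * jbr_dd x <= 1 * al * 1)
    by (apply Rmult_le_compat; [nra|lra|apply Rmult_le_compat_r|]; lra).
  assert (- (al * jbr_d x) <= al) by nra.
  nra.
Qed.

Lemma visc_sub_off_box (ue : R -> R -> R) : BUC_half ue ->
  q * lam <= 1 / 2 -> 0 < c1 -> 0 < al -> below_off_box visc_sub ue.
Proof.
  intros [[M HM] _] hql hc1 hal.
  assert (hM : 0 <= M) by (specialize (HM 0 0 ltac:(lra)); pose proof (Rabs_pos (ue 0 0)); lra).
  exists ((M + 1) / al + 1), ((M + 1) / c1 + 1).
  repeat split; [apply Rplus_le_lt_0_compat, Rlt_0_1; apply Rdiv_le_0_compat; lra ..|].
  intros x t ht hout. specialize (HM x t ht). apply Rabs_le_between in HM.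
  pose proof (heat_tent_le_2 (visc_xi x t) (visc_th t) (visc_th_pos t)).
  assert (q * lam * heat_tent (visc_xi x t) (visc_th t) <= 1).
  { assert (0 < q * lam) by nra.
    destruct (Rle_dec 0 (heat_tent (visc_xi x t) (visc_th t))); nra. }
  assert (0 <= q * cdf_scale * sqrt (soft_time (r * r) beta 0)).
  { pose proof cdf_scale_pos. pose proof (sqrt_pos (soft_time (r * r) beta 0)).
    repeat apply Rmult_le_pos; lra. }
  unfold visc_sub. pose proof (jbr_ge_abs x). pose proof (jbr_ge_1 x).
  destruct hout as [hx|ht2].
  - apply (Rmult_le_compat_l al) in hx; [|lra].
    replace (al * ((M + 1) / al + 1)) with (M + 1 + al) in hx by (field; lra). nra.
  - apply (Rmult_le_compat_l c1) in ht2; [|lra].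
    replace (c1 * ((M + 1) / c1 + 1)) with (M + 1 + c1) in ht2 by (field; lra). nra.
Qed.

Lemma visc_sub_0_1_ge : lam * lam = soft_time (r * r) beta 1 -> 1 <= lam -> r <= 1 ->
  beta <= r * r -> 0 <= heat_tent 0 1 ->
  q * heat_tent 0 1 - 3 / 2 * q * r - 2 * c1 - al <= visc_sub 0 1.
Proof.
  intros hll hlam1 hr1 hbr hH.
  assert (Hval : visc_sub 0 1 = q * lam * heat_tent 0 1
                   - q * cdf_scale * sqrt (soft_time (r * r) beta 0) - 2 * c1 - al).
  { unfold visc_sub, visc_xi, visc_th. rewrite <- hll, jbr_0.
    replace ((0 - 1 + 1) / (q * lam)) with 0 by (field; lra).
    replace (lam * lam / (lam * lam)) with 1 by (field; lra). ring. }
  assert (Hsqrt : sqrt (soft_time (r * r) beta 0) <= 2 * r).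
  { pose proof (soft_time_le (r * r) beta hbeta 0 ltac:(nra)).
    rewrite <- (sqrt_square (2 * r)) by lra. apply sqrt_le_1_alt. nra. }
  assert (q * heat_tent 0 1 <= q * lam * heat_tent 0 1).
  { replace (q * lam * heat_tent 0 1) with (q * heat_tent 0 1 * lam) by ring.
    rewrite <- (Rmult_1_r (q * heat_tent 0 1)) at 1.
    apply Rmult_le_compat_l; [apply Rmult_le_pos|]; lra. }
  assert (q * cdf_scale * sqrt (soft_time (r * r) beta 0) <= q * (3 / 4) * (2 * r)).
  { pose proof cdf_scale_pos. pose proof cdf_scale_le.
    apply Rmult_le_compat; [nra|apply sqrt_pos|nra|exact Hsqrt]. }
  lra.
Qed.

Lemma visc_sub_le_sol (F : R -> R) (L eps : R) (ue : R -> R -> R) :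
  (forall p q, Rabs p <= 2 -> Rabs q <= 2 -> Rabs (F p - F q) <= L * Rabs (p - q)) ->
  (forall p, 0 <= p <= 1 -> F p = p) -> (forall p, -1 <= p <= 0 -> F p <= p) ->
  BUC_half ue -> visc_sol_viscous F eps g ue ->
  q * q = eps -> q <= 1 -> q * lam <= 1 / 2 -> 0 < c1 <= 1 -> 0 < al <= 1 ->
  2 * (L + 3) * al <= c1 -> 2 * q * beta * beta <= c1 * (r * r * r * r * r) ->
  forall x t, 0 <= t -> visc_sub x t <= ue x t.
Proof.
  intros HL F_id F_le_id Hue Hsol hqq hq1 hql hc1 hal hLal hsmall.
  apply (viscous_sol_ge_strict_sub F eps g ue _ visc_sub_t visc_sub_x visc_sub_xx); auto.
  - apply visc_sub_C12.
  - apply visc_sub_UC; lra.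
  - apply visc_sub_init; lra.
  - intros x t ht. apply (visc_sub_strict F L eps); auto; lra.
  - apply visc_sub_off_box; auto; lra.
Qed.

End Viscous_subsolution.

Lemma clock_params_exist eps : 0 < eps < 1 / 4 ->
  exists r beta, 0 < r <= 1 / 256 /\ 0 < beta <= r * r /\
    2 * sqrt eps * beta * beta <= sqrt eps / 512 * (r * r * r * r * r) /\
    eps * soft_time (r * r) beta 1 <= 1 / 4.
Proof.
  intros heps. set (q := sqrt eps).
  assert (hq : 0 < q) by (apply sqrt_lt_R0; lra).
  assert (hq2 : q < 1 / 2) by (pose proof (sqrt_sqrt eps ltac:(lra)); fold q in H; nra).
  set (r := Rmin (1 / 256) ((1 - 4 * eps) / 8)).
  assert (hr : 0 < r <= 1 / 256) by (split; [apply Rmin_pos | apply Rmin_l]; lra).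
  assert (hr2 : r <= (1 - 4 * eps) / 8) by apply Rmin_r.
  assert (hrr : 0 < r * r) by nra.
  exists r, (r * r * r * (q / 512)).
  assert (hrc : 0 < r * (q / 512) <= 1 / 512) by (split; nra).
  replace (r * r * r * (q / 512)) with (r * r * (r * (q / 512))) by ring.
  assert (hbeta : 0 < r * r * (r * (q / 512)) <= r * r) by (split; nra).
  repeat split; try lra.
  - replace (2 * q * (r * r * (r * (q / 512))) * (r * r * (r * (q / 512))))
      with (2 * q * (r * (q / 512)) * (q / 512 * (r * r * r * r * r))) by ring.
    assert (0 < q / 512 * (r * r * r * r * r)) by (repeat apply Rmult_lt_0_compat; lra).
    assert (2 * q * (r * (q / 512)) <= 1) by nra. nra.
  - pose proof (soft_time_le (r * r) _ (proj1 hbeta) 1 ltac:(nra)). nra.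
Qed.

Lemma viscous_sol_0_1_ge (F : R -> R) (ue : R -> R -> R) (eps : R) :
  loc_lipschitz F -> (forall p, 0 <= p <= 1 -> F p = p) -> (forall p, -1 <= p <= 0 -> F p <= p) ->
  BUC_half ue -> visc_sol_viscous F eps g ue -> 0 < eps < 1 / 4 ->
  sqrt eps * (heat_tent 0 1 - 1 / 64) <= ue 0 1.
Proof.
  intros Hlip F_id F_le_id Hue Hsol heps. destruct (Hlip 2) as [L HL].
  pose proof (lip_const_nonneg F L HL F_id).
  destruct (clock_params_exist eps heps) as (r & beta & hr & hbeta & hsmall & hclock).
  set (q := sqrt eps) in *.
  assert (hq : 0 < q) by (apply sqrt_lt_R0; lra).
  assert (hqq : q * q = eps) by (apply sqrt_sqrt; lra).
  assert (hq2 : q < 1 / 2) by nra.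
  set (lam := sqrt (soft_time (r * r) beta 1)).
  pose proof (soft_time_ge (r * r) beta (proj1 hbeta) 1 ltac:(nra)).
  assert (hll : lam * lam = soft_time (r * r) beta 1) by (apply sqrt_sqrt; nra).
  assert (hlam : 1 <= lam) by (rewrite <- sqrt_1; apply sqrt_le_1_alt; nra).
  assert (hqlam : q * lam <= 1 / 2).
  { enough (q * lam * (q * lam) <= 1 / 2 * (1 / 2)) by nra.
    replace (q * lam * (q * lam)) with (eps * (lam * lam)) by (rewrite <- hqq; ring). rewrite hll. lra. }
  set (al := q / 512 / (2 * (L + 3))).
  assert (hal : 0 < al <= q / 512 / 6).
  { unfold al. split; [apply Rdiv_lt_0_compat; lra|].
    apply Rmult_le_compat_l; [lra|]. apply Rinv_le_contravar; lra. }
  pose proof (visc_sub_le_sol q r beta lam (q / 512) al hq ltac:(lra) (proj1 hbeta) ltac:(lra)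
    F L eps ue HL F_id F_le_id Hue Hsol hqq ltac:(lra) hqlam ltac:(lra) ltac:(lra)
    ltac:(unfold al; field_simplify; lra) hsmall 0 1 ltac:(lra)) as Hle.
  pose proof heat_tent_0_1_ge. pose proof exp_const_nonneg.
  pose proof (visc_sub_0_1_ge q r beta lam (q / 512) al hq ltac:(lra) (proj1 hbeta) ltac:(lra)
    hll hlam ltac:(lra) (proj2 hbeta) ltac:(lra)).
  nra.
Qed.

Theorem theorem1p3 (F : R -> R) :
  loc_lipschitz F ->
  (forall p, 0 <= p <= 1 -> F p = p) ->
  (forall p, -1 <= p <= 0 -> F p <= p) ->
  forall (u : R -> R -> R),
    BUC_half u -> visc_sol_HJ F g u ->
  forall (eps : R) (ueps : R -> R -> R),
    0 < eps < 1/4 ->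
    BUC_half ueps -> visc_sol_viscous F eps g ueps ->
    Rabs (ueps 0 1 - u 0 1) >= (exp 1 - 1) / (sqrt PI * exp 1) * sqrt eps.
Proof.
  intros Hlip F_id F_le_id u Hu Hsol eps ueps heps Hue Hsol_eps.
  assert (hq : 0 < sqrt eps < 1 / 2).
  { split; [apply sqrt_lt_R0; lra|].
    rewrite <- (sqrt_square (1 / 2)) by lra. apply sqrt_lt_1_alt. lra. }
  pose proof (HJ_sol_0_1_le F u (sqrt eps / 256) Hlip F_id Hu Hsol ltac:(lra)) as Hupper.
  pose proof (viscous_sol_0_1_ge F ueps eps Hlip F_id F_le_id Hue Hsol_eps heps) as Hlower.
  pose proof heat_tent_0_1_ge. pose proof exp_const_nonneg.
  rewrite Rabs_right; nra.
Qed.
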